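(* The orderings $(\mathfrak{M}, \supseteq )$ and $(\mathfrak{N}, \supseteq )$ are atomless and not separative, and the separative quotient of $(\mathfrak{M}, \supseteq )$ is isomorphic to the ordering $(\mathfrak{M_H},\supseteq)$ of all hereditary meager ideals, via the map induced by $\Phi$, where for $I\in\mathfrak{M}$, $\Phi(I)=\{A\subseteq\omega: I\upharpoonright A \text{ is not meager in } 2^A\}$.
   Context: All ideals on $\omega$ considered are proper and contain all finite subsets of $\omega$; they are viewed as subsets of the Cantor space $2^\omega=\mathcal{P}(\omega)$. $\mathfrak{M}$ (resp. $\mathfrak{N}$) is the set of ideals on $\omega$ that are meager (resp. Lebesgue null) subsets of $2^\omega$, ordered by reverse inclusion. For $X\subseteq\omega$, $I\upharpoonright X=\{A\in I:A\subseteq X\}$, $I^+=\mathcal{P}(\omega)\setminus I$. An ideal $I$ is hereditary meager if $I\upharpoonright X$ is meager in $2^X$ for every $X\in I^+$; $\mathfrak{M_H}$ is the set of such ideals ordered by $\supseteq$. In $(\mathfrak{M},\supseteq)$ (resp. $(\mathfrak{N},\supseteq)$) two ideals are compatible if some ideal of the class contains both. An ordering is atomless if every element has two incompatible elements below it, and separative if whenever $p\not\leq q$ there is $r\leq p$ incompatible with $q$. The separative quotient identifies $p,q$ when exactly the same elements are incompatible with $p$ as with $q$. *)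

(* Ideals on omega viewed as subsets of the Cantor space.
   A subset of omega is represented by its characteristic function
   (nat -> bool), i.e. directly as a point of 2^omega. *)
From Stdlib Require Import Reals.
Open Scope R_scope.

Definition subw := nat -> bool.

Definition sub_le (A B : subw) : Prop := forall n, A n = true -> B n = true.

Definition finite_sub (A : subw) : Prop :=
  exists N, forall n, (N <= n)%nat -> A n = false.

Definition union_sub (A B : subw) : subw := fun n => orb (A n) (B n).

Definition full_sub : subw := fun _ => true.

Definition family := subw -> Prop.

Definition is_ideal (I : family) : Prop :=
  (forall A, finite_sub A -> I A) /\
  (forall A B, I B -> sub_le A B -> I A) /\
  (forall A B, I A -> I B -> I (union_sub A B)) /\
  ~ I full_sub.

(* ---- Topology of 2^X, for X subset of omega.
   2^X is identified with {f : subw | f subset X} (points f with f k = false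
   off X). *)
Definition in_cyl (X : subw) (n : nat) (s : subw) (f : subw) : Prop :=
  forall k, (k < n)%nat -> X k = true -> f k = s k.

Definition nowhere_dense_in (X : subw) (N : family) : Prop :=
  forall (n : nat) (s : subw), exists (m : nat) (t : subw),
    (n <= m)%nat /\
    (forall k, (k < n)%nat -> X k = true -> t k = s k) /\
    (forall f, sub_le f X -> in_cyl X m t f -> ~ N f).

Definition meager_in (X : subw) (N : family) : Prop :=
  exists D : nat -> family,
    (forall i, nowhere_dense_in X (D i)) /\
    (forall f, sub_le f X -> N f -> exists i, D i f).

Definition meager (N : family) : Prop := meager_in full_sub N.

(* Lebesgue (fair coin product) null subsets of 2^omega: for every eps > 0
   they are covered by countably many basic cylinders
   [n_i, s_i] = {f | forall k < n_i, f k = s_i k} (of measure 2^-n_i)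
   of total measure < eps. *)
Definition null (N : family) : Prop :=
  forall eps : R, 0 < eps ->
    exists (n : nat -> nat) (s : nat -> subw),
      (forall f, N f -> exists i, forall k, (k < n i)%nat -> f k = s i k) /\
      (forall K, sum_f_R0 (fun i => (/ 2) ^ (n i)) K < eps).

Definition restr (I : family) (X : subw) : family :=
  fun A => I A /\ sub_le A X.

Definition meager_ideal (I : family) : Prop := is_ideal I /\ meager I.
Definition null_ideal (I : family) : Prop := is_ideal I /\ null I.
Definition hered_meager_ideal (I : family) : Prop :=
  is_ideal I /\ forall X, ~ I X -> meager_in X (restr I X).

(* "J <= I" in (C, ⊇)  means  J ⊇ I *)
Definition ord_le (J I : family) : Prop := forall A, I A -> J A.

Definition compatible (C : family -> Prop) (I J : family) : Prop :=
  exists K, C K /\ ord_le K I /\ ord_le K J.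

Definition atomless (C : family -> Prop) : Prop :=
  forall I, C I -> exists J K, C J /\ C K /\ ord_le J I /\ ord_le K I /\
    ~ compatible C J K.

Definition separative (C : family -> Prop) : Prop :=
  forall p q, C p -> C q -> ~ ord_le p q ->
    exists r, C r /\ ord_le r p /\ ~ compatible C r q.

Definition sq_equiv (C : family -> Prop) (p q : family) : Prop :=
  forall r, C r -> (~ compatible C r p <-> ~ compatible C r q).

Definition sq_le (C : family -> Prop) (p q : family) : Prop :=
  forall r, C r -> ord_le r p -> compatible C r q.

Definition Phi (I : family) : family :=
  fun A => ~ meager_in A (restr I A).

(* By Talagrand's characterisation, a downward closed meager set of subsets of X consists of sets
   containing only finitely many blocks of some sequence of disjoint finite blocks inside X.  So
   Phi(I) is an ideal, hereditarily meager because on a set outside Phi(I) it only contains sets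
   with finitely many blocks of I, and a hereditarily meager ideal is its own image.  Phi(I) is
   below Phi(J) iff every meager extension of I is compatible with J: join the extension with J in
   one direction, and in the other use the trace {x | x ∩ A ∈ I} of I on a set A outside Phi(I).
   Splitting the blocks of a meager ideal into even and odd ones yields two incompatible
   extensions.

   Nullness is handled through finite covers by cylinders, for which Fubini's theorem holds.  A
   null ideal I splits along any Z on which both traces of I on Z and on its complement are null,
   and by Fubini almost every Z qualifies: the set of pairs (a, Z) with a ∩ Z ∈ I is null, as a
   measure preserving block map sends triples of such pairs into I.  In both cases separativity
   fails for the meet of a prime ideal containing the odd numbers with the ideal of sets having
   finitely many odd elements, since a prime ideal is neither meager nor null. *)

From Stdlib Require Import Reals Lra Lia Classical ClassicalEpsilon FunctionalExtensionality Arith List Bool.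
From mathcomp Require classical_sets.
Import ListNotations.
Open Scope nat_scope.

Definition dec (P : Prop) : bool := if excluded_middle_informative P then true else false.

Lemma dec_true (P : Prop) : dec P = true <-> P.
Proof. unfold dec; destruct (excluded_middle_informative P); split; auto; discriminate. Qed.

Lemma dec_false (P : Prop) : dec P = false <-> ~ P.
Proof. unfold dec; destruct (excluded_middle_informative P); split; auto; try discriminate; tauto. Qed.

Definition inter_sub (x y : subw) : subw := fun n => andb (x n) (y n).
Definition compl_sub (x : subw) : subw := fun n => negb (x n).
Definition empty_sub : subw := fun _ => false.
Definition upd (s : subw) (a : nat) (b : bool) : subw := fun k => if Nat.eqb k a then b else s k.

Lemma upd_other x L b k : k <> L -> upd x L b k = x k.
Proof. intros h; unfold upd; destruct (Nat.eqb_spec k L); congruence. Qed.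

Lemma sub_le_refl x : sub_le x x.
Proof. intros n h; exact h. Qed.

Lemma sub_le_trans x y z : sub_le x y -> sub_le y z -> sub_le x z.
Proof. intros h1 h2 n h; apply h2, h1, h. Qed.

Lemma sub_le_full x : sub_le x full_sub.
Proof. intros n _; reflexivity. Qed.

Lemma sub_le_interl x y : sub_le (inter_sub x y) x.
Proof. intros n h; unfold inter_sub in h; apply andb_prop in h; tauto. Qed.

Lemma sub_le_interr x y : sub_le (inter_sub x y) y.
Proof. intros n h; unfold inter_sub in h; apply andb_prop in h; tauto. Qed.

Lemma sub_le_inter x y z : sub_le z x -> sub_le z y -> sub_le z (inter_sub x y).
Proof. intros h1 h2 n h; unfold inter_sub; rewrite (h1 n h), (h2 n h); reflexivity. Qed.

Lemma sub_le_unionl x y : sub_le x (union_sub x y).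
Proof. intros n h; unfold union_sub; rewrite h; reflexivity. Qed.

Lemma sub_le_unionr x y : sub_le y (union_sub x y).
Proof. intros n h; unfold union_sub; rewrite h; destruct (x n); reflexivity. Qed.

Lemma sub_le_union x y z : sub_le x z -> sub_le y z -> sub_le (union_sub x y) z.
Proof.
  intros h1 h2 n h; unfold union_sub in h.
  destruct (x n) eqn:E; [apply h1; auto | apply h2; auto].
Qed.

Lemma inter_union_distr x y z :
  sub_le (inter_sub (union_sub x y) z) (union_sub (inter_sub x z) (inter_sub y z)).
Proof. intros n h; unfold inter_sub, union_sub in *; destruct (x n), (y n), (z n); auto. Qed.

Lemma union_compl_sub_full x : sub_le full_sub (union_sub x (compl_sub x)).
Proof. intros n _; unfold union_sub, compl_sub; destruct (x n); reflexivity. Qed.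

Lemma finite_empty : finite_sub empty_sub.
Proof. exists 0; intros; reflexivity. Qed.

Lemma finite_sub_mono x y : finite_sub y -> sub_le x y -> finite_sub x.
Proof.
  intros [N h] hs; exists N; intros n hn; destruct (x n) eqn:E; auto.
  specialize (h n hn); rewrite (hs n E) in h; discriminate.
Qed.

Lemma finite_union_sub x y : finite_sub x -> finite_sub y -> finite_sub (union_sub x y).
Proof.
  intros [N1 h1] [N2 h2]; exists (Nat.max N1 N2); intros n hn; unfold union_sub.
  rewrite (h1 n ltac:(lia)), (h2 n ltac:(lia)); reflexivity.
Qed.

Section IdealFacts.
Variable I : family.
Hypothesis hI : is_ideal I.

Lemma ideal_sub_closed x y : I y -> sub_le x y -> I x.
Proof. destruct hI as [_ [h _]]; eauto. Qed.

Lemma ideal_finite x : finite_sub x -> I x.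
Proof. destruct hI as [h _]; auto. Qed.

Lemma ideal_union x y : I x -> I y -> I (union_sub x y).
Proof. destruct hI as [_ [_ [h _]]]; auto. Qed.

Lemma ideal_proper : ~ I full_sub.
Proof. destruct hI as [_ [_ [_ h]]]; auto. Qed.

Lemma ideal_empty : I empty_sub.
Proof. apply ideal_finite, finite_empty. Qed.

Lemma ideal_not_both_compl x : I x -> I (compl_sub x) -> False.
Proof.
  intros h1 h2; apply ideal_proper.
  exact (ideal_sub_closed _ _ (ideal_union _ _ h1 h2) (union_compl_sub_full x)).
Qed.

End IdealFacts.

(** * Meager sets of subsets *)

Definition infinitely_often (S : nat -> Prop) : Prop := forall i, exists k, i <= k /\ S k.

Definition blocks (b : nat -> nat) (P : nat -> subw) : Prop :=
  (forall k, b k < b (S k)) /\ (forall k j, P k j = true -> b k <= j < b (S k)).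

Lemma not_infinitely_often S : ~ infinitely_often S -> exists N, forall k, N <= k -> ~ S k.
Proof.
  intros h; apply NNPP; intros hc; apply h; intros i.
  apply NNPP; intros hi; apply hc; exists i; intros k hk hS; apply hi; eauto.
Qed.

Lemma infinitely_often_mono (S T : nat -> Prop) :
  (forall k, S k -> T k) -> infinitely_often S -> infinitely_often T.
Proof. intros h hS i; destruct (hS i) as [k [hk hk']]; eauto. Qed.

Lemma meager_in_mono X (F G : family) :
  meager_in X F -> (forall f, sub_le f X -> G f -> F f) -> meager_in X G.
Proof. intros [D [h1 h2]] h; exists D; split; auto. Qed.

Lemma blocks_inter b P Y : blocks b P -> blocks b (fun k => inter_sub (P k) Y).
Proof. intros [h1 h2]; split; auto; intros k j hj; exact (h2 k j (sub_le_interl _ _ j hj)). Qed.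

Section Blocks.
Variables (b : nat -> nat) (P : nat -> subw).
Hypothesis hbP : blocks b P.

Lemma blocks_ge k : k <= b k.
Proof. destruct hbP as [h _]; induction k; [lia|]. specialize (h k); lia. Qed.

Lemma blocks_unique k k' j : b k <= j < b (S k) -> b k' <= j < b (S k') -> k = k'.
Proof.
  destruct hbP as [h _].
  assert (mono : forall k k', k < k' -> b (S k) <= b k').
  { intros k1 k2 hk; induction hk; [lia|]. specialize (h m); lia. }
  intros h1 h2; destruct (lt_eq_lt_dec k k') as [[c|c]|c]; auto.
  - pose proof (mono k k' c); lia.
  - pose proof (mono k' k c); lia.
Qed.

Lemma meager_in_few_blocks X (Q : nat -> Prop) :
  infinitely_often (fun k => Q k /\ sub_le (P k) X) ->
  meager_in X (fun f => ~ infinitely_often (fun k => Q k /\ sub_le (P k) f)).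
Proof.
  intros hQ.
  exists (fun i f => forall k, i <= k -> Q k -> ~ sub_le (P k) f); split.
  - intros i n s. destruct (hQ (Nat.max i n)) as [k [hk [hQk hX]]].
    pose proof (blocks_ge k) as hbk; destruct hbP as [_ hwin].
    exists (Nat.max n (b (S k))), (fun j => if Nat.ltb j n then s j else true).
    split; [lia|]; split.
    + intros j hj _; destruct (Nat.ltb_spec j n); [reflexivity | lia].
    + intros f _ hc hD; apply (hD k ltac:(lia) hQk).
      intros j hj; pose proof (hwin k j hj).
      rewrite (hc j ltac:(lia) (hX j hj)); destruct (Nat.ltb_spec j n); [lia | reflexivity].
  - intros f _ hf; destruct (not_infinitely_often _ hf) as [N hN].
    exists N; intros k hk hQk hPk; exact (hN k hk (conj hQk hPk)).
Qed.

Lemma meager_in_few_blocks_all X : (forall k, sub_le (P k) X) ->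
  meager_in X (fun f => ~ infinitely_often (fun k => sub_le (P k) f)).
Proof.
  intros hPX; eapply meager_in_mono.
  - apply (meager_in_few_blocks X (fun _ => True)); intros i; exists i; auto.
  - intros f _ hf hio; apply hf; revert hio; apply infinitely_often_mono; tauto.
Qed.

Definition blocks_inside (x : subw) : subw := fun j => dec (exists k, P k j = true /\ sub_le (P k) x).

Lemma blocks_inside_sub x : sub_le (blocks_inside x) x.
Proof. intros j hj; destruct (proj1 (dec_true _) hj) as [k [h1 h2]]; exact (h2 j h1). Qed.

Lemma blocks_inside_window x k j :
  sub_le (P k) x -> b k <= j < b (S k) -> blocks_inside x j = P k j.
Proof.
  intros hk hj; destruct (P k j) eqn:E.
  - apply dec_true; eauto.
  - apply dec_false; intros [k' [h1 _]].
    destruct hbP as [_ hwin]; rewrite (blocks_unique k' k j (hwin k' j h1) hj) in h1; congruence.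
Qed.

End Blocks.

Lemma nowhere_dense_union X (A B : family) : nowhere_dense_in X A -> nowhere_dense_in X B ->
  nowhere_dense_in X (fun f => A f \/ B f).
Proof.
  intros hA hB n s. destruct (hA n s) as [m1 [t1 [h1 [h2 h3]]]].
  destruct (hB m1 t1) as [m2 [t2 [h4 [h5 h6]]]].
  exists m2, t2; split; [lia|]; split.
  - intros k hk hX; rewrite (h5 k ltac:(lia) hX); apply h2; auto.
  - intros f hf hc [hAf|hBf].
    + apply (h3 f hf); auto; intros k hk hX; rewrite (hc k ltac:(lia) hX); apply h5; auto.
    + apply (h6 f hf); auto.
Qed.

Lemma nowhere_dense_prefix_union X (D : nat -> family) : (forall i, nowhere_dense_in X (D i)) ->
  forall k, nowhere_dense_in X (fun f => exists i, i <= k /\ D i f).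
Proof.
  intros hnd k; induction k; intros n s.
  - destruct (hnd 0 n s) as [m [t [h1 [h2 h3]]]]; exists m, t; repeat split; auto.
    intros f hf hc [i [hi hDi]]; replace i with 0 in hDi by lia; exact (h3 f hf hc hDi).
  - destruct (nowhere_dense_union X _ _ IHk (hnd (S k)) n s) as [m [t [h1 [h2 h3]]]].
    exists m, t; repeat split; auto; intros f hf hc [i [hi hDi]]; apply (h3 f hf hc).
    destruct (Nat.eq_dec i (S k)); [subst; right; auto | left; exists i; split; auto; lia].
Qed.

(* Both values of the bit [a] are handled by two successive extensions. *)
Lemma nowhere_dense_window X (D : family) : nowhere_dense_in X D ->
  forall a n, a <= n -> forall s, exists m t, n <= m /\
    (forall k, k < n -> X k = true -> t k = s k) /\
    (forall f, sub_le f X -> (forall k, a <= k -> k < m -> X k = true -> f k = t k) -> ~ D f).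
Proof.
  intros hD a; induction a as [|a IH]; intros n han s.
  - destruct (hD n s) as [m [t [h1 [h2 h3]]]]; exists m, t; split; auto; split; auto.
    intros f hf hc; apply h3; auto; intros k hk hX; apply hc; auto; lia.
  - destruct (IH n ltac:(lia) (upd s a false)) as [m0 [t0 [g1 [g2 g3]]]].
    destruct (IH m0 ltac:(lia) (upd t0 a true)) as [m1 [t1 [k1 [k2 k3]]]].
    exists m1, (upd t1 a (s a)); split; [lia|]; split.
    + intros k hk hX; unfold upd; destruct (Nat.eqb_spec k a); [subst; reflexivity|].
      rewrite (k2 k ltac:(lia) hX), upd_other, (g2 k hk hX), upd_other; auto.
    + intros f hf hc; destruct (f a) eqn:Efa; [apply k3 | apply g3]; auto;
        intros k hk1 hk2 hX; destruct (Nat.eq_dec k a) as [->|hka].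
      * rewrite Efa, (k2 a ltac:(lia) hX); unfold upd; rewrite Nat.eqb_refl; reflexivity.
      * rewrite (hc k ltac:(lia) hk2 hX), upd_other; auto.
      * rewrite Efa, (g2 a ltac:(lia) hX); unfold upd; rewrite Nat.eqb_refl; reflexivity.
      * rewrite (hc k ltac:(lia) ltac:(lia) hX), upd_other, (k2 k hk2 hX), upd_other; auto.
Qed.

(* The k-th block is chosen so that
   every set agreeing with it on its window avoids the first k nowhere dense sets.  If [x] contained
   infinitely many blocks, the union of these blocks would lie in [F], hence in some [D i], while
   agreeing on its window with a block of index above [i]. *)
Lemma meager_down_closed_blocks X (F : family) :
  (forall x y, F x -> sub_le y x -> F y) -> meager_in X F ->
  exists b P, blocks b P /\ (forall k, sub_le (P k) X) /\
    forall x, sub_le x X -> F x -> ~ infinitely_often (fun k => sub_le (P k) x).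
Proof.
  intros Fdown [D [hnd hcov]].
  pose (D' := fun k f => exists i, i <= k /\ D i f).
  assert (exb : forall k n0, exists p : nat * subw, n0 < fst p /\ forall f, sub_le f X ->
      (forall j, n0 <= j -> j < fst p -> X j = true -> f j = snd p j) -> ~ D' k f).
  { intros k n0.
    destruct (nowhere_dense_window X _ (nowhere_dense_prefix_union X D hnd k) n0 (S n0)
               ltac:(lia) empty_sub) as [m [t [h1 [_ h3]]]].
    exists (m, t); simpl; split; [lia | exact h3]. }
  destruct (choice _ (fun k => choice _ (exb k))) as [step hstep].
  pose (b := fix b k := match k with 0 => 0 | S k' => fst (step k' (b k')) end).
  assert (hbS : forall k, b (S k) = fst (step k (b k))) by reflexivity.
  pose (t := fun k => snd (step k (b k))).
  pose (P := fun k j => t k j && X j && (Nat.leb (b k) j && Nat.ltb j (b (S k)))).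
  assert (hbP : blocks b P).
  { split; [intros k; rewrite hbS; apply hstep|].
    intros k j h; unfold P in h; rewrite !andb_true_iff, Nat.leb_le, Nat.ltb_lt in h; tauto. }
  exists b, P; split; [exact hbP|]; split.
  { intros k j h; unfold P in h; rewrite !andb_true_iff in h; tauto. }
  intros x hxX hFx hinf.
  pose proof (blocks_inside_sub P x) as hyx.
  destruct (hcov _ (sub_le_trans _ _ _ hyx hxX) (Fdown x _ hFx hyx)) as [i hDi].
  destruct (hinf i) as [k [hik hPk]].
  apply (proj2 (hstep k (b k)) _ (sub_le_trans _ _ _ hyx hxX)); [|exists i; split; auto].
  intros j hj1 hj2 hXj; rewrite <- hbS in hj2.
  rewrite (blocks_inside_window b P hbP x k j hPk ltac:(lia)).
  unfold P; rewrite hXj, (proj2 (Nat.leb_le _ _) hj1), (proj2 (Nat.ltb_lt _ _) hj2).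
  now rewrite !andb_true_r.
Qed.

Lemma not_meager_in_self X (F : family) : (forall f, sub_le f X -> F f) -> ~ meager_in X F.
Proof.
  intros h hm.
  destruct (meager_down_closed_blocks X (fun f => sub_le f X)) as [b [P [_ [hPX hfew]]]].
  - intros x y hx hy; eapply sub_le_trans; eauto.
  - eapply meager_in_mono; eauto.
  - apply (hfew X (sub_le_refl X) (sub_le_refl X)); intros i; exists i; split; auto.
Qed.


(** * The map [Phi] and hereditarily meager ideals *)

Definition meager_restr (I : family) (X : subw) : Prop := meager_in X (restr I X).

Definition down_closed (I : family) : Prop := forall x y, I x -> sub_le y x -> I y.

Lemma ideal_down_closed I : is_ideal I -> down_closed I.
Proof. intros hI x y hx hy; exact (ideal_sub_closed I hI y x hx hy). Qed.

Lemma meager_restr_blocks I X : down_closed I -> meager_restr I X ->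
  exists b P, blocks b P /\ (forall k, sub_le (P k) X) /\
    forall x, I x -> sub_le x X -> ~ infinitely_often (fun k => sub_le (P k) x).
Proof.
  intros hI hX.
  destruct (meager_down_closed_blocks X (restr I X)) as [b [P [hbP [hPX hfew]]]]; auto.
  - intros x y [hx hxX] hyx; split; [eapply hI | eapply sub_le_trans]; eauto.
  - exists b, P; split; [exact hbP|]; split; [exact hPX|].
    intros x hx hxX; exact (hfew x hxX (conj hx hxX)).
Qed.

Lemma not_meager_restr_hits I X b P (Q : nat -> Prop) : ~ meager_restr I X -> blocks b P ->
  infinitely_often (fun k => Q k /\ sub_le (P k) X) ->
  exists x, I x /\ sub_le x X /\ infinitely_often (fun k => Q k /\ sub_le (P k) x).
Proof.
  intros hn hbP hQ; apply NNPP; intros hc; apply hn.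
  eapply meager_in_mono; [exact (meager_in_few_blocks b P hbP X Q hQ)|].
  intros f hfX [hIf _] hio; apply hc; eauto.
Qed.

Lemma meager_restr_full I : meager_restr I full_sub <-> meager I.
Proof.
  split; intros h; eapply meager_in_mono; eauto.
  - intros f _ hf; split; auto; apply sub_le_full.
  - intros f _ [hf _]; exact hf.
Qed.

Lemma meager_ideal_blocks I : meager_ideal I ->
  exists b P, blocks b P /\ forall x, I x -> ~ infinitely_often (fun k => sub_le (P k) x).
Proof.
  intros [hI hIm].
  destruct (meager_restr_blocks I full_sub (ideal_down_closed I hI) (proj2 (meager_restr_full I) hIm))
    as [b [P [hbP [_ hfew]]]].
  exists b, P; split; auto; intros x hx; exact (hfew x hx (sub_le_full x)).
Qed.

Lemma meager_restr_super I A B : down_closed I -> meager_restr I B -> sub_le B A -> meager_restr I A.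
Proof.
  intros hI hB hBA.
  destruct (meager_restr_blocks I B hI hB) as [b [P [hbP [hPB hfew]]]].
  eapply meager_in_mono.
  - apply (meager_in_few_blocks_all b P hbP A); intros k; eapply sub_le_trans; eauto.
  - intros f hfA [hIf _] hio; apply (hfew (inter_sub f B)).
    + eapply hI; eauto; apply sub_le_interl.
    + apply sub_le_interr.
    + revert hio; apply infinitely_often_mono; intros k hk; apply sub_le_inter; auto.
Qed.

Lemma meager_restr_union I A B : is_ideal I ->
  meager_restr I (union_sub A B) -> meager_restr I A \/ meager_restr I B.
Proof.
  intros hI hAB; apply NNPP; intros hc.
  assert (hA : ~ meager_restr I A) by tauto; assert (hB : ~ meager_restr I B) by tauto.
  destruct (meager_restr_blocks I _ (ideal_down_closed I hI) hAB) as [b [P [hbP [hPAB hfew]]]].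
  destruct (not_meager_restr_hits I A b _ (fun _ => True) hA (blocks_inter b P A hbP))
    as [x1 [hx1 [hx1A hio1]]].
  { intros i; exists i; split; auto; split; auto; apply sub_le_interr. }
  destruct (not_meager_restr_hits I B b _ (fun k => sub_le (inter_sub (P k) A) x1) hB
              (blocks_inter b P B hbP)) as [x2 [hx2 [hx2B hio2]]].
  { revert hio1; apply infinitely_often_mono; intros k [_ hk]; split; auto; apply sub_le_interr. }
  apply (hfew (union_sub x1 x2)).
  - apply ideal_union; auto.
  - apply sub_le_union; eapply sub_le_trans; eauto; [apply sub_le_unionl | apply sub_le_unionr].
  - revert hio2; apply infinitely_often_mono; intros k [h1 h2] j hj.
    specialize (hPAB k j hj); specialize (h1 j); specialize (h2 j).
    unfold inter_sub, union_sub in *; rewrite hj in *.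
    destruct (A j), (B j), (x1 j), (x2 j); simpl in *; auto.
Qed.

Lemma ideal_sub_Phi I A : is_ideal I -> I A -> Phi I A.
Proof.
  intros hI hA; apply not_meager_in_self.
  intros f hf; split; auto; exact (ideal_sub_closed I hI f A hA hf).
Qed.

(* For [X] outside [Phi I], a set [A] inside [X] is in [Phi I] only if it contains finitely many of
   the blocks witnessing that [I] is meager on [X]. *)
Lemma Phi_hered_meager I : meager_ideal I -> hered_meager_ideal (Phi I).
Proof.
  intros [hI hm]; split; [split; [|split; [|split]]|].
  - intros A hA; apply ideal_sub_Phi; auto; apply ideal_finite; auto.
  - intros A B hB hAB hc; apply hB; eapply meager_restr_super; eauto; apply ideal_down_closed; auto.
  - intros A B hA hB hc; destruct (meager_restr_union I A B hI hc); auto.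
  - intros hc; apply hc; apply meager_restr_full; auto.
  - intros X hX; assert (hMX : meager_restr I X) by (apply NNPP; exact hX).
    destruct (meager_restr_blocks I X (ideal_down_closed I hI) hMX) as [b [P [hbP [hPX hfew]]]].
    eapply meager_in_mono; [exact (meager_in_few_blocks_all b P hbP X hPX)|].
    intros A hAX [hPhiA _] hio; apply hPhiA.
    eapply meager_in_mono; [apply (meager_in_few_blocks b P hbP A (fun _ => True))|].
    + revert hio; apply infinitely_often_mono; auto.
    + intros f hfA [hIf _] hiof; apply (hfew f hIf (sub_le_trans _ _ _ hfA hAX)).
      revert hiof; apply infinitely_often_mono; tauto.
Qed.

Lemma hered_meager_Phi_onto H : hered_meager_ideal H ->
  exists I, meager_ideal I /\ (forall A, Phi I A <-> H A).
Proof.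
  intros [hH hher]; exists H; split.
  - split; auto; apply meager_restr_full, hher, ideal_proper; auto.
  - intros A; split.
    + intros hP; apply NNPP; intros hc; apply hP, hher; auto.
    + intros hA; apply ideal_sub_Phi; auto.
Qed.

(** * The separative quotient of meager ideals *)

Lemma ord_le_refl I : ord_le I I.
Proof. intros A h; exact h. Qed.

Lemma ord_le_trans I J K : ord_le I J -> ord_le J K -> ord_le I K.
Proof. intros h1 h2 A h; apply h1, h2, h. Qed.

Lemma sq_equiv_iff_sq_le (C : family -> Prop) p q : C p -> C q ->
  (sq_equiv C p q <-> sq_le C p q /\ sq_le C q p).
Proof.
  intros hp hq; split.
  - intros he; split; intros r hr hrle; apply NNPP; intros hc;
      [apply (proj2 (he r hr) hc) | apply (proj1 (he r hr) hc)];
      exists r; repeat split; auto using ord_le_refl.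
  - intros [hpq hqp] r hr; split; intros hn [K [hK [hKr hK']]]; apply hn;
      [destruct (hqp K hK hK') as [K' [hK'C [h1 h2]]] | destruct (hpq K hK hK') as [K' [hK'C [h1 h2]]]];
      exists K'; repeat split; eauto using ord_le_trans.
Qed.

Lemma Phi_antitone I J A : ord_le J I -> Phi I A -> Phi J A.
Proof. intros hJI hA hJ; apply hA; eapply meager_in_mono; eauto; intros f _ [h1 h2]; split; auto. Qed.

Definition ideal_join (I J : family) : family :=
  fun x => exists B C, I B /\ J C /\ sub_le x (union_sub B C).

Lemma ideal_join_l I J : J empty_sub -> ord_le (ideal_join I J) I.
Proof.
  intros hJ A hA; exists A, empty_sub.
  repeat split; [exact hA | exact hJ | apply sub_le_unionl].
Qed.

Lemma ideal_join_r I J : is_ideal I -> ord_le (ideal_join I J) J.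
Proof.
  intros hI A hA; exists empty_sub, A.
  repeat split; [exact (ideal_empty I hI) | exact hA | apply sub_le_unionr].
Qed.

Lemma ideal_join_ideal I J : is_ideal I -> down_closed J -> J empty_sub ->
  (forall x y, J x -> J y -> J (union_sub x y)) -> ~ ideal_join I J full_sub ->
  is_ideal (ideal_join I J).
Proof.
  intros hI hJd hJ0 hJu hprop; refine (conj _ (conj _ (conj _ hprop))).
  - intros A hA; exists A, empty_sub; repeat split; auto; [apply ideal_finite | apply sub_le_unionl]; auto.
  - intros A B [B0 [C0 [h1 [h2 h3]]]] hAB; exists B0, C0; repeat split; eauto using sub_le_trans.
  - intros A B [B1 [C1 [h1 [h2 h3]]]] [B2 [C2 [h4 [h5 h6]]]].
    exists (union_sub B1 B2), (union_sub C1 C2).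
    split; [apply ideal_union; auto|]; split; [apply hJu; auto|].
    intros n hn; specialize (h3 n); specialize (h6 n); unfold union_sub in *.
    destruct (A n), (B n), (B1 n), (C1 n), (B2 n), (C2 n); simpl in *; auto.
Qed.

(* A set of [J] cannot absorb infinitely many blocks of [I], since [I] is not meager on it. *)
Lemma ideal_join_meager I J : meager_ideal I -> is_ideal J -> (forall C, J C -> Phi I C) ->
  meager_ideal (ideal_join I J).
Proof.
  intros hIm hJ hC; pose proof (proj1 hIm) as hI.
  destruct (meager_ideal_blocks I hIm) as [b [P [hbP hfew]]].
  assert (key : forall x, ideal_join I J x -> ~ infinitely_often (fun k => sub_le (P k) x)).
  { intros x [B [C [hB [hJC hx]]]] hio.
    destruct (not_meager_restr_hits I C b _ (fun k => sub_le (P k) x) (hC C hJC) (blocks_inter b P C hbP))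
      as [B' [hB' [_ hio']]].
    { revert hio; apply infinitely_often_mono; intros k hk; split; auto; apply sub_le_interr. }
    apply (hfew (union_sub B B') (ideal_union I hI _ _ hB hB')).
    revert hio'; apply infinitely_often_mono; intros k [h1 h2] j hj.
    specialize (hx j (h1 j hj)); specialize (h2 j).
    unfold inter_sub, union_sub in *; rewrite hj in h2.
    destruct (B j), (C j), (B' j); simpl in *; auto. }
  split.
  - apply ideal_join_ideal;
      [exact hI | exact (ideal_down_closed J hJ) | exact (ideal_empty J hJ) | exact (ideal_union J hJ) |].
    intros hfull; apply (key full_sub hfull); intros i; exists i; split; auto; apply sub_le_full.
  - apply meager_restr_full; eapply meager_in_mono.
    + apply (meager_in_few_blocks_all b P hbP full_sub); intros; apply sub_le_full.
    + intros f _ [hf _]; apply key; auto.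
Qed.

Definition ideal_trace (I : family) (A : subw) : family := fun x => I (inter_sub x A).

Lemma ideal_trace_ideal I A : is_ideal I -> ~ I A -> is_ideal (ideal_trace I A).
Proof.
  intros hI hA; unfold ideal_trace; refine (conj _ (conj _ (conj _ _))).
  - intros x hx; apply ideal_finite; auto; eapply finite_sub_mono; eauto; apply sub_le_interl.
  - intros x y hy hxy; eapply ideal_sub_closed; eauto.
    apply sub_le_inter; [eapply sub_le_trans; [apply sub_le_interl | auto] | apply sub_le_interr].
  - intros x y hx hy; eapply ideal_sub_closed;
      [auto | apply (ideal_union I hI _ _ hx hy) | apply inter_union_distr].
  - intros hc; apply hA; eapply ideal_sub_closed; eauto.
    apply sub_le_inter; [apply sub_le_full | apply sub_le_refl].
Qed.

Lemma ideal_trace_sub I A : is_ideal I -> ord_le (ideal_trace I A) I.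
Proof. intros hI x hx; exact (ideal_sub_closed I hI _ _ hx (sub_le_interl _ _)). Qed.

Lemma ideal_trace_disjoint I A x : is_ideal I -> sub_le (inter_sub x A) empty_sub -> ideal_trace I A x.
Proof. intros hI h; exact (ideal_sub_closed I hI _ _ (ideal_empty I hI) h). Qed.

Lemma ideal_trace_proper I A : is_ideal I -> is_ideal (ideal_trace I A) -> ~ I A.
Proof.
  intros hI hT hA; apply (ideal_proper _ hT).
  exact (ideal_sub_closed I hI _ _ hA (sub_le_interr _ _)).
Qed.

Lemma ideal_trace_meager I A : is_ideal I -> meager_restr I A -> meager_ideal (ideal_trace I A).
Proof.
  intros hI hA.
  destruct (meager_restr_blocks I A (ideal_down_closed I hI) hA) as [b [P [hbP [hPA hfew]]]].
  split.
  - apply ideal_trace_ideal; auto; intros hIA; exact (ideal_sub_Phi I A hI hIA hA).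
  - apply meager_restr_full; eapply meager_in_mono.
    + apply (meager_in_few_blocks_all b P hbP full_sub); intros; apply sub_le_full.
    + intros x _ [hx _] hio; apply (hfew _ hx (sub_le_interr _ _)).
      revert hio; apply infinitely_often_mono; intros k hk; apply sub_le_inter; auto.
Qed.

Lemma sq_le_of_Phi_le I J : meager_ideal I -> is_ideal J ->
  ord_le (Phi I) (Phi J) -> sq_le meager_ideal I J.
Proof.
  intros hI hJ hle r hr hrI; exists (ideal_join r J); split.
  - apply ideal_join_meager; auto.
    intros C hC; apply (Phi_antitone I r C hrI), hle, ideal_sub_Phi; auto.
  - split; [apply ideal_join_l, ideal_empty | apply ideal_join_r]; [exact hJ | exact (proj1 hr)].
Qed.

(* If [I] is meager on [A], its trace on [A] extends [I] and contains the complement of [A]; a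
   common meager extension with [J] would then absorb [J] on [A], so [J] is meager on [A]. *)
Lemma Phi_le_of_sq_le I J : is_ideal I -> sq_le meager_ideal I J -> ord_le (Phi I) (Phi J).
Proof.
  intros hI hsq A hPJ hMA.
  destruct (hsq (ideal_trace I A) (ideal_trace_meager I A hI hMA) (ideal_trace_sub I A hI))
    as [K [[hK hKm] [hKr hKJ]]].
  assert (hKc : K (compl_sub A)).
  { apply hKr, ideal_trace_disjoint; auto; intros n; unfold inter_sub, compl_sub; destruct (A n); auto. }
  destruct (meager_ideal_blocks K (conj hK hKm)) as [b [P [hbP hfew]]].
  destruct (not_meager_restr_hits J A b _ (fun _ => True) hPJ (blocks_inter b P A hbP))
    as [x [hx [_ hio]]].
  { intros i; exists i; split; auto; split; auto; apply sub_le_interr. }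
  apply (hfew (union_sub x (compl_sub A)) (ideal_union K hK _ _ (hKJ x hx) hKc)).
  revert hio; apply infinitely_often_mono; intros k [_ hk] j hj; specialize (hk j).
  unfold inter_sub, union_sub, compl_sub in *; rewrite hj in hk.
  destruct (A j), (x j); simpl in *; auto.
Qed.

Lemma Phi_le_iff_sq_le I J : meager_ideal I -> meager_ideal J ->
  (ord_le (Phi I) (Phi J) <-> sq_le meager_ideal I J).
Proof.
  intros hI hJ; split; [apply sq_le_of_Phi_le; auto; apply hJ | apply Phi_le_of_sq_le; apply hI].
Qed.

Lemma Phi_eq_iff_sq_equiv I J : meager_ideal I -> meager_ideal J ->
  ((forall A, Phi I A <-> Phi J A) <-> sq_equiv meager_ideal I J).
Proof.
  intros hI hJ; rewrite sq_equiv_iff_sq_le, <- !Phi_le_iff_sq_le by auto.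
  split; [intros h; split; intros A; apply h | intros [h1 h2] A; split; [apply h2 | apply h1]].
Qed.

Lemma meager_restr_of_blocks I b P W : blocks b P ->
  (forall x, I x -> ~ infinitely_often (fun k => sub_le (P k) x)) ->
  infinitely_often (fun k => sub_le (P k) W) -> meager_restr I W.
Proof.
  intros hbP hfew hW; eapply meager_in_mono.
  - apply (meager_in_few_blocks b P hbP W (fun _ => True)); revert hW; apply infinitely_often_mono; auto.
  - intros f _ [hf _] hio; apply (hfew f hf); revert hio; apply infinitely_often_mono; tauto.
Qed.

(* Even numbered blocks on one side, odd numbered ones on the other. *)
Lemma meager_ideal_split I : meager_ideal I ->
  exists E, meager_restr I E /\ meager_restr I (compl_sub E).
Proof.
  intros hIm; destruct (meager_ideal_blocks I hIm) as [b [P [hbP hfew]]].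
  pose (E := fun i => dec (exists j, b (2 * j) <= i < b (S (2 * j)))).
  exists E; split; apply (meager_restr_of_blocks I b P _ hbP hfew); intros i;
    pose proof hbP as [_ hwin].
  - exists (2 * i); split; [lia|]; intros j hj; apply dec_true; exists i; apply (hwin _ j hj).
  - exists (S (2 * i)); split; [lia|]; intros j hj; unfold compl_sub.
    destruct (E j) eqn:EE; [|reflexivity]; destruct (proj1 (dec_true _) EE) as [j' hj'].
    pose proof (blocks_unique b P hbP _ _ j (hwin _ j hj) hj'); lia.
Qed.

Lemma ideal_trace_incompatible C I E : (forall K, C K -> is_ideal K) -> is_ideal I ->
  ~ compatible C (ideal_trace I E) (ideal_trace I (compl_sub E)).
Proof.
  intros hC hI [L [hL [h1 h2]]]; apply (ideal_not_both_compl L (hC L hL) E).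
  - apply h2, ideal_trace_disjoint; auto; intros n; unfold inter_sub, compl_sub; destruct (E n); auto.
  - apply h1, ideal_trace_disjoint; auto; intros n; unfold inter_sub, compl_sub; destruct (E n); auto.
Qed.

Lemma atomless_of_split (C : family -> Prop) : (forall K, C K -> is_ideal K) ->
  (forall I, C I -> exists E, C (ideal_trace I E) /\ C (ideal_trace I (compl_sub E))) -> atomless C.
Proof.
  intros hC hsplit I hI; destruct (hsplit I hI) as [E [h1 h2]].
  exists (ideal_trace I E), (ideal_trace I (compl_sub E)); repeat split; auto;
    try apply ideal_trace_sub; try apply ideal_trace_incompatible; auto.
Qed.

Lemma meager_ideals_atomless : atomless meager_ideal.
Proof.
  apply atomless_of_split; [intros K hK; apply hK|].
  intros I hI; destruct (meager_ideal_split I hI) as [E [h1 h2]].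
  exists E; split; apply ideal_trace_meager; auto; apply hI.
Qed.

Definition prime_ideal (M : family) : Prop := is_ideal M /\ forall x, M x \/ M (compl_sub x).

Lemma prime_ideal_not_meager M : prime_ideal M -> ~ meager M.
Proof.
  intros [hM hprime] hm; destruct (meager_ideal_split M (conj hM hm)) as [E [h1 h2]].
  destruct (hprime E) as [h|h]; revert h; apply ideal_trace_proper; auto; apply ideal_trace_meager; auto.
Qed.

(** * Failure of separativity *)

Lemma ideal_adjoin_ideal A x : is_ideal A -> ~ A (compl_sub x) ->
  is_ideal (ideal_join A (fun y => sub_le y x)).
Proof.
  intros hA hx; apply ideal_join_ideal; auto.
  - intros y z hy hz; eapply sub_le_trans; eauto.
  - intros n hn; discriminate.
  - intros y z; apply sub_le_union.
  - intros [a [c [ha [hc hfull]]]]; apply hx; eapply ideal_sub_closed; eauto.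
    intros n hn; specialize (hfull n eq_refl); specialize (hc n); unfold compl_sub, union_sub in *.
    destruct (x n), (a n), (c n); simpl in *; auto.
Qed.

(* Zorn's lemma is applied to the ideals extending [J] together with the empty family, so that
   the union of the empty chain is admissible. *)
Lemma prime_ideal_extension J : is_ideal J -> exists M, prime_ideal M /\ ord_le M J.
Proof.
  intros hJ.
  pose (Adm := fun X : family => (forall x, ~ X x) \/ (is_ideal X /\ ord_le X J)).
  destruct (@classical_sets.Zorn_bigcup subw Adm) as [A [hA hmax]].
  - intros F hF htot.
    destruct (classic (exists X x, F X /\ X x)) as [[X0 [x0 [hX0 hx0]]] | hno];
      [right | left; intros x [X hX hx]; apply hno; eauto].
    assert (memI : forall X a, F X -> X a -> is_ideal X /\ ord_le X J).
    { intros X a hX ha; destruct (hF X hX) as [h|h]; [destruct (h a ha) | exact h]. }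
    split; [refine (conj _ (conj _ (conj _ _))) |].
    + intros a ha; exists X0; auto; apply (memI X0 x0 hX0 hx0), hJ, ha.
    + intros a c [X hX hc] hac; exists X; auto.
      exact (ideal_sub_closed X (proj1 (memI X c hX hc)) a c hc hac).
    + intros a c [X hX ha] [Y hY hc]; destruct (htot X Y hX hY) as [hXY|hYX].
      * exists Y; auto; apply (ideal_union Y (proj1 (memI Y c hY hc))); auto; apply hXY; auto.
      * exists X; auto; apply (ideal_union X (proj1 (memI X a hX ha))); auto; apply hYX; auto.
    + intros [X hX hf]; exact (ideal_proper X (proj1 (memI X _ hX hf)) hf).
    + intros a ha; exists X0; auto; apply (memI X0 x0 hX0 hx0), ha.
  - assert (hAJ : is_ideal A /\ ord_le A J).
    { destruct hA as [hemp|h]; auto; exfalso; apply (hmax J); [split | right; split; auto using ord_le_refl].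
      - intros t ht; destruct (hemp t ht).
      - intros hc; apply (hemp empty_sub), hc, (ideal_empty J hJ). }
    destruct hAJ as [hAi hAle]; exists A; split; [split; [exact hAi|] | exact hAle].
    intros x; apply NNPP; intros hc.
    assert (hx : ideal_join A (fun y => sub_le y x) x)
      by (exists empty_sub, x; split; [exact (ideal_empty A hAi)|];
          split; [apply sub_le_refl | apply sub_le_unionr]).
    pose proof (ideal_adjoin_ideal A x hAi ltac:(tauto)) as hadj.
    apply (hmax (ideal_join A (fun y => sub_le y x))); [split | right; split; auto].
    + intros y hy; apply ideal_join_l; auto; intros n hn; discriminate.
    + intros hsub; apply hc; left; apply hsub, hx.
    + eapply ord_le_trans; [apply ideal_join_l | exact hAle]; intros n hn; discriminate.
Qed.

Definition odds : subw := fun n => Nat.odd n.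
Definition evens : subw := compl_sub odds.

Lemma odds_infinite : ~ finite_sub odds.
Proof.
  intros [N h]; specialize (h (S (2 * N)) ltac:(lia)); unfold odds in h.
  rewrite Nat.odd_succ, Nat.even_mul in h; discriminate.
Qed.

Lemma evens_infinite : ~ finite_sub evens.
Proof.
  intros [N h]; specialize (h (2 * N) ltac:(lia)); unfold evens, compl_sub, odds in h.
  rewrite Nat.odd_mul in h; discriminate.
Qed.

Definition finite_on (W : subw) : family := fun x => finite_sub (inter_sub x W).

Lemma finite_on_ideal W : ~ finite_sub W -> is_ideal (finite_on W).
Proof.
  intros hW; unfold finite_on; refine (conj _ (conj _ (conj _ _))).
  - intros x hx; eapply finite_sub_mono; eauto; apply sub_le_interl.
  - intros x y hy hxy; eapply finite_sub_mono; eauto.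
    apply sub_le_inter; [eapply sub_le_trans; [apply sub_le_interl | auto] | apply sub_le_interr].
  - intros x y hx hy; eapply finite_sub_mono; [apply (finite_union_sub _ _ hx hy) | apply inter_union_distr].
  - intros hc; apply hW; eapply finite_sub_mono; eauto.
    apply sub_le_inter; [apply sub_le_full | apply sub_le_refl].
Qed.

Lemma finite_on_disjoint W x : sub_le x (compl_sub W) -> finite_on W x.
Proof.
  intros h; eapply finite_sub_mono; [apply finite_empty|].
  intros n hn; unfold inter_sub in hn; apply andb_prop in hn as [h1 h2].
  specialize (h n h1); unfold compl_sub in h; rewrite h2 in h; discriminate.
Qed.

Lemma finite_on_odds_meager : meager_ideal (finite_on odds).
Proof.
  split; [exact (finite_on_ideal odds odds_infinite)|].
  apply meager_restr_full, (meager_restr_of_blocks _ (fun k => 2 * k) (fun k j => Nat.eqb j (S (2 * k)))).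
  - split; [intros; lia | intros k j hj; apply Nat.eqb_eq in hj; lia].
  - intros x [N hN] hio; destruct (hio N) as [k [hk hkx]].
    specialize (hN (S (2 * k)) ltac:(lia)); unfold inter_sub, odds in hN.
    rewrite (hkx _ (Nat.eqb_refl _)), Nat.odd_succ, Nat.even_mul in hN; discriminate.
  - intros i; exists i; split; auto; apply sub_le_full.
Qed.

Definition ideal_meet (I J : family) : family := fun x => I x /\ J x.

Lemma ideal_meet_ideal I J : is_ideal I -> is_ideal J -> is_ideal (ideal_meet I J).
Proof.
  intros hI hJ; refine (conj _ (conj _ (conj _ _))).
  - intros x hx; split; apply ideal_finite; auto.
  - intros x y [h1 h2] hxy; split; eapply ideal_sub_closed; eauto.
  - intros x y [h1 h2] [h3 h4]; split; apply ideal_union; auto.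
  - intros [h _]; exact (ideal_proper I hI h).
Qed.

(* The witness against separativity, for meager and for null ideals alike, is the meet of a prime
   ideal containing the odd numbers with [finite_on odds]. *)
Section PrimeMeet.
Variable M : family.
Hypotheses (hM : prime_ideal M) (hMo : M odds).

Lemma prime_meet_not_le : ~ ord_le (ideal_meet M (finite_on odds)) (finite_on odds).
Proof.
  intros hle; destruct (hle evens (finite_on_disjoint _ _ (sub_le_refl _))) as [hev _].
  exact (ideal_not_both_compl M (proj1 hM) odds hMo hev).
Qed.

Lemma prime_meet_evens r f : ord_le r (ideal_meet M (finite_on odds)) ->
  M f -> sub_le f evens -> r f.
Proof. intros hr hf hfe; apply hr; split; [exact hf | apply finite_on_disjoint, hfe]. Qed.

End PrimeMeet.

Lemma prime_ideal_with_odds : exists M, prime_ideal M /\ M odds.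
Proof.
  destruct (prime_ideal_extension _ (finite_on_ideal evens evens_infinite)) as [M [hM hle]].
  exists M; split; auto; apply hle, finite_on_disjoint; intros n h.
  unfold evens, compl_sub; rewrite h; reflexivity.
Qed.

Lemma split_evens_odds x : sub_le x (union_sub (inter_sub x evens) (inter_sub x odds)).
Proof.
  intros n hn; unfold union_sub, inter_sub, evens, compl_sub; rewrite hn; destruct (odds n); reflexivity.
Qed.

(* An extension [r] of the meet is not meager on any set of [finite_on odds]: the odd part of such a
   set is finite, and on the even numbers [r] extends the prime ideal, which is not meager. *)
Lemma meager_ideals_not_separative : ~ separative meager_ideal.
Proof.
  intros hsep; destruct prime_ideal_with_odds as [M [hM hMo]].
  destruct finite_on_odds_meager as [hq hqm].
  assert (hp : meager_ideal (ideal_meet M (finite_on odds))).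
  { split; [apply ideal_meet_ideal; auto; apply hM|].
    eapply meager_in_mono; eauto; intros f _ [_ h]; exact h. }
  destruct (hsep _ _ hp (conj hq hqm) (prime_meet_not_le M hM hMo)) as [r [hr [hrp hnc]]].
  apply hnc; exists (ideal_join r (finite_on odds)); split;
    [| split; [apply ideal_join_l, ideal_empty | apply ideal_join_r, hr]; auto].
  apply ideal_join_meager; auto; intros C hC hMr.
  destruct (meager_restr_union r _ _ (proj1 hr)
              (meager_restr_super r _ _ (ideal_down_closed r (proj1 hr)) hMr (split_evens_odds C)))
    as [hE|hO].
  - apply (prime_ideal_not_meager M hM), meager_restr_full.
    apply (meager_restr_super M _ evens (ideal_down_closed M (proj1 hM))); [|apply sub_le_full].
    eapply meager_in_mono;
      [exact (meager_restr_super r _ _ (ideal_down_closed r (proj1 hr)) hE (sub_le_interr _ _))|].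
    intros f hf [hMf _]; split; auto; exact (prime_meet_evens M r f hrp hMf hf).
  - apply (ideal_sub_Phi r (inter_sub C odds) (proj1 hr)); [|exact hO].
    apply ideal_finite; [apply hr | exact hC].
Qed.

(** * Null sets via finite covers by cylinders *)

Open Scope R_scope.

(* A cylinder fixes the bits of [cyl_pat] at the positions below [cyl_len] selected by [cyl_mask];
   its measure is [2^-(number of fixed bits)]. *)
Record cyl := Cyl { cyl_len : nat; cyl_mask : subw; cyl_pat : subw }.

Definition cyl_mem (g : cyl) (x : subw) : Prop :=
  forall k, (k < cyl_len g)%nat -> cyl_mask g k = true -> x k = cyl_pat g k.

Fixpoint mask_count (L : nat) (m : subw) : nat :=
  match L with 0 => 0 | S L' => mask_count L' m + (if m L' then 1 else 0) end%nat.

Definition cyl_weight (g : cyl) : R := (/2) ^ mask_count (cyl_len g) (cyl_mask g).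

Definition list_weight (l : list cyl) : R := fold_right (fun g a => cyl_weight g + a) 0 l.

Fixpoint sumR (n : nat) (f : nat -> R) : R := match n with 0%nat => 0 | S n' => sumR n' f + f n' end.

Definition cover := nat -> list cyl.

Definition covers (c : cover) (F : family) : Prop :=
  forall x, F x -> exists n g, In g (c n) /\ cyl_mem g x.

Definition cover_weight (c : cover) (N : nat) : R := sumR N (fun n => list_weight (c n)).

Definition cyl_null (F : family) : Prop :=
  forall eps, 0 < eps -> exists c, covers c F /\ forall N, cover_weight c N <= eps.

Lemma half_pow_pos n : 0 < (/2) ^ n.
Proof. apply pow_lt; lra. Qed.

Lemma half_pow_small eps : 0 < eps -> exists M, (/2) ^ M < eps.
Proof.
  intros he; destruct (pow_lt_1_zero (/2) ltac:(rewrite Rabs_right; lra) eps he) as [M hM].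
  exists M; specialize (hM M (le_n M)); rewrite Rabs_right in hM; auto.
  apply Rle_ge, Rlt_le, half_pow_pos.
Qed.

Lemma cyl_weight_pos g : 0 < cyl_weight g.
Proof. apply half_pow_pos. Qed.

Lemma list_weight_app l1 l2 : list_weight (l1 ++ l2) = list_weight l1 + list_weight l2.
Proof. induction l1; simpl; [lra|]; rewrite IHl1; lra. Qed.

Lemma sumR_ext n f g : (forall i, (i < n)%nat -> f i = g i) -> sumR n f = sumR n g.
Proof. induction n; intros h; simpl; auto; rewrite IHn; [rewrite h; auto | intros; apply h; lia]. Qed.

Lemma sumR_le n f g : (forall i, (i < n)%nat -> f i <= g i) -> sumR n f <= sumR n g.
Proof.
  induction n; intros h; simpl; [lra|].
  pose proof (IHn ltac:(intros; apply h; lia)); pose proof (h n ltac:(lia)); lra.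
Qed.

Lemma sumR_nonneg n f : (forall i, 0 <= f i) -> 0 <= sumR n f.
Proof. induction n; intros h; simpl; [lra|]; pose proof (IHn h); pose proof (h n); lra. Qed.

Lemma sumR_plus n f g : sumR n (fun i => f i + g i) = sumR n f + sumR n g.
Proof. induction n; simpl; [lra|]; rewrite IHn; lra. Qed.

Lemma sumR_scal n c f : sumR n (fun i => c * f i) = c * sumR n f.
Proof. induction n; simpl; [lra|]; rewrite IHn; lra. Qed.

Lemma sumR_mono n n' f : (forall i, 0 <= f i) -> (n <= n')%nat -> sumR n f <= sumR n' f.
Proof. intros h hn; induction hn; [lra|]; simpl; pose proof (h m); lra. Qed.

Lemma sumR_split a b f : sumR (a + b) f = sumR a f + sumR b (fun j => f (a + j)%nat).
Proof. induction b; simpl; [rewrite Nat.add_0_r; lra|]; rewrite Nat.add_succ_r; simpl; rewrite IHb; lra. Qed.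

Lemma sumR_geom n eps : sumR n (fun j => (/2) ^ S j * eps) = eps * (1 - (/2) ^ n).
Proof. induction n; [simpl; lra|]; change (sumR (S n) ?f) with (sumR n f + f n); rewrite IHn; simpl; lra. Qed.

Lemma sum_f_R0_sumR f K : sum_f_R0 f K = sumR (S K) f.
Proof. induction K; simpl; [lra|]; rewrite IHK; simpl; lra. Qed.

Lemma cyl_null_sub F G : cyl_null G -> (forall x, F x -> G x) -> cyl_null F.
Proof.
  intros hG h eps he; destruct (hG eps he) as [c [h1 h2]].
  exists c; split; auto; intros x hx; apply h1, h, hx.
Qed.

Lemma cyl_null_union F G : cyl_null F -> cyl_null G -> cyl_null (fun x => F x \/ G x).
Proof.
  intros hF hG eps he; destruct (hF (eps / 2) ltac:(lra)) as [c1 [h1 h2]].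
  destruct (hG (eps / 2) ltac:(lra)) as [c2 [h3 h4]].
  exists (fun n => c1 n ++ c2 n); split.
  - intros x [hx|hx]; [destruct (h1 x hx) as [n [g [hi hg]]] | destruct (h3 x hx) as [n [g [hi hg]]]];
      exists n, g; split; auto; apply in_or_app; auto.
  - intros N; unfold cover_weight.
    rewrite (sumR_ext N _ (fun n => list_weight (c1 n) + list_weight (c2 n))) by (intros; apply list_weight_app).
    rewrite sumR_plus; specialize (h2 N); specialize (h4 N); unfold cover_weight in *; lra.
Qed.

Lemma list_weight_flat_map (f : nat -> list cyl) n :
  list_weight (flat_map f (seq 0 n)) = sumR n (fun j => list_weight (f j)).
Proof.
  induction n; [reflexivity|].
  rewrite seq_S, flat_map_app, list_weight_app, IHn; simpl flat_map; rewrite app_nil_r; reflexivity.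
Qed.

(* The [j]-th set is covered with total weight [eps / 2^(j+1)]; at stage [n] the [n - j]-th
   piece of the [j]-th cover is used. *)
Lemma cyl_null_countable_union (F : nat -> family) :
  (forall j, cyl_null (F j)) -> cyl_null (fun x => exists j, F j x).
Proof.
  intros hF eps he.
  assert (ex : forall j, exists c, covers c (F j) /\ forall N, cover_weight c N <= (/2) ^ S j * eps).
  { intros j; apply hF; pose proof (half_pow_pos (S j)); nra. }
  destruct (choice _ ex) as [c hc].
  pose (d := fun n => flat_map (fun j => c j (n - j)%nat) (seq 0 (S n))).
  assert (hd : forall N, cover_weight d N = sumR N (fun j => cover_weight (c j) (N - j))).
  { induction N; [reflexivity|].
    change (cover_weight d (S N)) with (cover_weight d N + list_weight (d N)).
    unfold d at 2; rewrite IHN, list_weight_flat_map.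
    transitivity (sumR (S N) (fun j => cover_weight (c j) (N - j))
                  + sumR (S N) (fun j => list_weight (c j (N - j)%nat))).
    - change (sumR (S N) ?f) with (sumR N f + f N); cbv beta; rewrite Nat.sub_diag.
      change (cover_weight (c N) 0) with 0; ring.
    - rewrite <- sumR_plus; apply sumR_ext; intros i hi.
      replace (S N - i)%nat with (S (N - i)) by lia; reflexivity. }
  exists d; split.
  - intros x [j hx]; destruct (proj1 (hc j) x hx) as [n [g [hi hg]]].
    exists (n + j)%nat, g; split; auto; apply in_flat_map; exists j.
    split; [apply in_seq; lia|]; replace (n + j - j)%nat with n by lia; auto.
  - intros N; rewrite hd; apply Rle_trans with (sumR N (fun j => (/2) ^ S j * eps)).
    + apply sumR_le; intros i _; apply hc.
    + rewrite sumR_geom; pose proof (half_pow_pos N); nra.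
Qed.

Definition full_cyl (n : nat) (s : subw) : cyl := Cyl n full_sub s.

Lemma mask_count_full n : mask_count n full_sub = n.
Proof. induction n; simpl; auto; rewrite IHn; unfold full_sub; lia. Qed.

Lemma cyl_weight_full n s : cyl_weight (full_cyl n s) = (/2) ^ n.
Proof. unfold cyl_weight; simpl; rewrite mask_count_full; auto. Qed.

Lemma cyl_mem_full n s x : cyl_mem (full_cyl n s) x <-> forall k, (k < n)%nat -> x k = s k.
Proof. unfold cyl_mem; simpl; split; intros h k hk; auto. Qed.

Lemma list_weight_full_cyls L ts : list_weight (map (full_cyl L) ts) = INR (length ts) * (/2) ^ L.
Proof. induction ts; simpl; [lra|]; rewrite IHts, cyl_weight_full; destruct (length ts); simpl; lra. Qed.

Lemma cyl_mem_local g x y : (forall k, (k < cyl_len g)%nat -> x k = y k) -> cyl_mem g x -> cyl_mem g y.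
Proof. intros h hx k hk hm; rewrite <- h; auto. Qed.

Lemma cyl_mem_succ L m s x :
  cyl_mem (Cyl (S L) m s) x <-> cyl_mem (Cyl L m s) x /\ (m L = true -> x L = s L).
Proof.
  unfold cyl_mem; simpl; split.
  - intros h; split; auto.
  - intros [h1 h2] k hk hm; destruct (Nat.eq_dec k L) as [->|]; auto; apply h1; auto; lia.
Qed.

(** * Averages over finitely many coordinates *)

Definition ind (P : Prop) : R := if excluded_middle_informative P then 1 else 0.

Lemma ind_true (P : Prop) : P -> ind P = 1.
Proof. unfold ind; destruct (excluded_middle_informative P); tauto. Qed.

Lemma ind_false (P : Prop) : ~ P -> ind P = 0.
Proof. unfold ind; destruct (excluded_middle_informative P); tauto. Qed.

Lemma ind_nonneg P : 0 <= ind P.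
Proof. destruct (classic P); [rewrite ind_true | rewrite ind_false]; auto; lra. Qed.

Lemma ind_iff P Q : (P <-> Q) -> ind P = ind Q.
Proof. intros h; unfold ind; destruct (excluded_middle_informative P), (excluded_middle_informative Q); tauto. Qed.

(* [avg L g x] averages [g] over the [2^L] ways of changing the first [L] bits of [x]. *)
Fixpoint avg (L : nat) (g : subw -> R) (x : subw) : R :=
  match L with
  | 0%nat => g x
  | S L' => (avg L' g (upd x L' false) + avg L' g (upd x L' true)) / 2
  end.

Lemma avg_ext L g h x : (forall y, g y = h y) -> avg L g x = avg L h x.
Proof. revert x; induction L; intros x H; simpl; auto; rewrite !IHL; auto. Qed.

Lemma avg_mono L g h x : (forall y, g y <= h y) -> avg L g x <= avg L h x.
Proof.
  revert x; induction L; intros x H; simpl; auto.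
  pose proof (IHL (upd x L false) H); pose proof (IHL (upd x L true) H); lra.
Qed.

Lemma avg_plus L g h x : avg L (fun y => g y + h y) x = avg L g x + avg L h x.
Proof. revert x; induction L; intros x; simpl; auto; rewrite !IHL; lra. Qed.

Lemma avg_scal L c g x : avg L (fun y => c * g y) x = c * avg L g x.
Proof. revert x; induction L; intros x; simpl; auto; rewrite !IHL; lra. Qed.

Lemma avg_const L c x : avg L (fun _ => c) x = c.
Proof. revert x; induction L; intros x; simpl; auto; rewrite !IHL; lra. Qed.

Lemma avg_sumR L n (f : nat -> subw -> R) x :
  avg L (fun y => sumR n (fun i => f i y)) x = sumR n (fun i => avg L (f i) x).
Proof. induction n; simpl; [apply avg_const | rewrite avg_plus, IHn; reflexivity]. Qed.

Lemma avg_local L0 g : (forall x y, (forall k, (k < L0)%nat -> x k = y k) -> g x = g y) ->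
  forall L x y, (forall k, (L <= k < L0)%nat -> x k = y k) -> avg L g x = avg L g y.
Proof.
  intros hg L; induction L; intros x y h; simpl.
  - apply hg; intros k hk; apply h; lia.
  - f_equal; f_equal; apply IHL; intros k hk; unfold upd; destruct (Nat.eqb_spec k L); auto; apply h; lia.
Qed.

Lemma avg_extra_coords L0 g : (forall x y, (forall k, (k < L0)%nat -> x k = y k) -> g x = g y) ->
  forall L x, (L0 <= L)%nat -> avg L g x = avg L0 g x.
Proof.
  intros hg L x hL; induction hL; auto; simpl; rewrite <- IHhL.
  rewrite (avg_local L0 g hg m (upd x m false) x), (avg_local L0 g hg m (upd x m true) x); [lra | |];
    intros k hk; rewrite upd_other; auto; lia.
Qed.

Lemma avg_factor L (a : subw -> R) h : (forall y y', (forall k, (L <= k)%nat -> y k = y' k) -> a y = a y') ->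
  forall x, avg L (fun y => a y * h y) x = a x * avg L h x.
Proof.
  induction L; intros ha x; simpl; auto.
  rewrite !IHL by (intros y y' hy; apply ha; intros k hk; apply hy; lia).
  rewrite (ha (upd x L false) x), (ha (upd x L true) x); [lra | |]; intros k hk; rewrite upd_other; auto; lia.
Qed.

Lemma upd_comm x a b c d : a <> c -> upd (upd x a b) c d = upd (upd x c d) a b.
Proof.
  intros h; apply functional_extensionality; intros k; unfold upd.
  destruct (Nat.eqb_spec k c), (Nat.eqb_spec k a); subst; auto; congruence.
Qed.

Lemma upd_id x L : upd x L (x L) = x.
Proof. apply functional_extensionality; intros k; unfold upd; destruct (Nat.eqb_spec k L); subst; auto. Qed.

Lemma avg_upd L g x L' b : (L <= L')%nat -> avg L g (upd x L' b) = avg L (fun y => g (upd y L' b)) x.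
Proof.
  revert x; induction L; intros x hL; simpl; auto.
  rewrite (upd_comm x L' b L false), (upd_comm x L' b L true), !IHL by lia; reflexivity.
Qed.

(* The last fixed bit of the cylinder contributes an independent factor [1/2]. *)
Lemma avg_cyl_exact L m s x : avg L (fun y => ind (cyl_mem (Cyl L m s) y)) x = cyl_weight (Cyl L m s).
Proof.
  revert x; induction L; intros x.
  - apply ind_true; intros k hk; simpl in hk; lia.
  - pose (c := fun y : subw => if m L then ind (y L = s L) else 1).
    assert (hc : forall y y', (forall k, (L <= k)%nat -> y k = y' k) -> c y = c y')
      by (intros y y' hy; unfold c; rewrite (hy L (le_n _)); reflexivity).
    assert (heq : forall z, avg L (fun y => ind (cyl_mem (Cyl (S L) m s) y)) z = c z * cyl_weight (Cyl L m s)).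
    { intros z; rewrite <- (IHL z), <- (avg_factor L c _ hc); apply avg_ext; intros y.
      unfold c; rewrite (ind_iff _ _ (cyl_mem_succ L m s y)).
      destruct (m L); [destruct (classic (y L = s L)) as [e|e] |].
      - rewrite (ind_true _ e), Rmult_1_l; apply ind_iff; tauto.
      - rewrite (ind_false _ e), Rmult_0_l; apply ind_false; tauto.
      - rewrite Rmult_1_l; apply ind_iff; split; [tauto | intros h; split; auto; discriminate]. }
    simpl avg; rewrite !heq; unfold c, cyl_weight; simpl; destruct (m L).
    + unfold upd; rewrite !Nat.eqb_refl; rewrite pow_add; simpl.
      destruct (s L); [rewrite (ind_false (false = true)), (ind_true (true = true)) |
                       rewrite (ind_true (false = false)), (ind_false (true = false))]; auto; lra.
    + rewrite Nat.add_0_r; lra.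
Qed.

Lemma avg_cyl L g x : (cyl_len g <= L)%nat -> avg L (fun y => ind (cyl_mem g y)) x = cyl_weight g.
Proof.
  intros hL; destruct g as [Lg m s]; rewrite (avg_extra_coords Lg); [apply avg_cyl_exact | | exact hL].
  intros y y' hy; apply ind_iff; split; apply cyl_mem_local; simpl; intros; [|symmetry]; auto.
Qed.

Lemma local_set_cover L (D : subw -> Prop) :
  (forall x y, (forall k, (k < L)%nat -> x k = y k) -> D x -> D y) ->
  exists ts, (forall x, D x -> exists t, In t ts /\ cyl_mem (full_cyl L t) x) /\
    INR (length ts) * (/2) ^ L = avg L (fun y => ind (D y)) empty_sub.
Proof.
  revert D; induction L; intros D hD.
  - destruct (classic (D empty_sub)) as [h|h].
    + exists [empty_sub]; split; [intros x _; exists empty_sub; split; [left; auto | apply cyl_mem_full; intros; lia]|].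
      simpl; rewrite ind_true; auto; lra.
    + exists []; split; [intros x hx; exfalso; apply h; apply (hD x); auto; intros; lia|].
      simpl; rewrite ind_false; auto; lra.
  - assert (hDb : forall b x y, (forall k, (k < L)%nat -> x k = y k) -> D (upd x L b) -> D (upd y L b)).
    { intros b x y h; apply hD; intros k hk; unfold upd; destruct (Nat.eqb_spec k L); auto; apply h; lia. }
    destruct (IHL _ (hDb false)) as [ts0 [hc0 hw0]]; destruct (IHL _ (hDb true)) as [ts1 [hc1 hw1]].
    exists (map (fun t => upd t L false) ts0 ++ map (fun t => upd t L true) ts1); split.
    + intros x hx.
      assert (hext : forall t, cyl_mem (full_cyl L t) x -> cyl_mem (full_cyl (S L) (upd t L (x L))) x).
      { intros t ht; apply cyl_mem_full; intros k hk; unfold upd.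
        destruct (Nat.eqb_spec k L); [subst; auto | rewrite cyl_mem_full in ht; apply ht; lia]. }
      destruct (x L) eqn:ExL.
      * destruct (hc1 x) as [t [ht hxt]]; [rewrite <- ExL, upd_id; auto|].
        exists (upd t L true); split; [apply in_or_app; right | apply hext; auto].
        apply (in_map (fun t => upd t L true)); auto.
      * destruct (hc0 x) as [t [ht hxt]]; [rewrite <- ExL, upd_id; auto|].
        exists (upd t L false); split; [apply in_or_app; left | apply hext; auto].
        apply (in_map (fun t => upd t L false)); auto.
    + rewrite length_app, !length_map, plus_INR; simpl avg; rewrite !avg_upd by lia.
      rewrite <- hw0, <- hw1; simpl; lra.
Qed.

Lemma cyl_split_full g : exists ts,
  (forall x, cyl_mem g x -> exists t, In t ts /\ cyl_mem (full_cyl (cyl_len g) t) x) /\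
  INR (length ts) * (/2) ^ cyl_len g = cyl_weight g.
Proof.
  destruct (local_set_cover (cyl_len g) (cyl_mem g)) as [ts [h1 h2]].
  - intros x y hxy; apply cyl_mem_local; auto.
  - exists ts; split; auto; rewrite h2; apply avg_cyl; lia.
Qed.

(** * Equivalence with Lebesgue nullness *)

Definition full_cover (c : cover) : Prop := forall n g, In g (c n) -> cyl_mask g = full_sub.

Lemma cyl_null_full_cover F : cyl_null F ->
  forall eps, 0 < eps -> exists c, full_cover c /\ covers c F /\ forall N, cover_weight c N <= eps.
Proof.
  intros hF eps he; destruct (hF eps he) as [c [hc hw]].
  destruct (choice _ cyl_split_full) as [tsf htsf].
  exists (fun n => flat_map (fun g => map (full_cyl (cyl_len g)) (tsf g)) (c n)); split; [|split].
  - intros n g hg; apply in_flat_map in hg as [g' [_ hg]]; apply in_map_iff in hg as [t [<- _]]; reflexivity.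
  - intros x hx; destruct (hc x hx) as [n [g [hg hgx]]]; destruct (proj1 (htsf g) x hgx) as [t [ht hxt]].
    exists n, (full_cyl (cyl_len g) t); split; auto; apply in_flat_map; exists g; split; auto; apply in_map; auto.
  - intros N; apply Rle_trans with (cover_weight c N); auto.
    unfold cover_weight; apply Req_le, sumR_ext; intros i _; generalize (c i); induction l; simpl; auto.
    rewrite list_weight_app, IHl, list_weight_full_cyls, (proj2 (htsf a)); reflexivity.
Qed.

Definition cover_prefix (d : cover) (N : nat) : list cyl := flat_map d (seq 0 N).

Lemma cover_prefix_S d N : cover_prefix d (S N) = cover_prefix d N ++ d N.
Proof. unfold cover_prefix; rewrite seq_S, flat_map_app; simpl; rewrite app_nil_r; reflexivity. Qed.

Lemma cover_prefix_nth d N N' i g0 : (N <= N')%nat -> (i < length (cover_prefix d N))%nat ->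
  nth i (cover_prefix d N') g0 = nth i (cover_prefix d N) g0.
Proof.
  intros hN hi; induction hN; auto.
  assert (hmono : (length (cover_prefix d N) <= length (cover_prefix d m))%nat).
  { clear IHhN; induction hN; auto; rewrite cover_prefix_S, length_app; lia. }
  rewrite cover_prefix_S, app_nth1; auto; lia.
Qed.

Lemma list_weight_nth l g0 : sumR (length l) (fun i => cyl_weight (nth i l g0)) = list_weight l.
Proof.
  induction l; [reflexivity|]; cbn [length].
  replace (S (length l)) with (1 + length l)%nat by lia; rewrite sumR_split; simpl; rewrite IHl; lra.
Qed.

(* Enumerating the pieces of a cover in order: the [i]-th cylinder is read off a long enough
   prefix, which is possible since every piece is nonempty. *)
Lemma cover_enumeration (d : cover) : (forall n, d n <> []) ->
  exists e : nat -> cyl, (forall n g, In g (d n) -> exists i, e i = g) /\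
    (forall i, exists n, In (e i) (d n)) /\
    (forall K, sumR K (fun i => cyl_weight (e i)) <= cover_weight d K).
Proof.
  intros hne; pose (g0 := full_cyl 0 empty_sub).
  assert (hlen : forall N, (N <= length (cover_prefix d N))%nat).
  { induction N; [lia|]; rewrite cover_prefix_S, length_app.
    destruct (d N) eqn:E; [destruct (hne N E) | simpl; lia]. }
  exists (fun i => nth i (cover_prefix d (S i)) g0); split; [|split].
  - intros n g hg; destruct (In_nth _ _ g0 hg) as [j [hj hjg]].
    exists (length (cover_prefix d n) + j)%nat.
    assert (hi : (length (cover_prefix d n) + j < length (cover_prefix d (S n)))%nat)
      by (rewrite cover_prefix_S, length_app; lia).
    rewrite (cover_prefix_nth d (S n)) by (auto; pose proof (hlen n); lia).
    rewrite cover_prefix_S, app_nth2, Nat.add_comm, Nat.add_sub by lia; exact hjg.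
  - intros i; assert (h : In (nth i (cover_prefix d (S i)) g0) (cover_prefix d (S i)))
      by (apply nth_In; specialize (hlen (S i)); lia).
    apply in_flat_map in h as [n [_ hn]]; eauto.
  - intros K; unfold cover_weight; rewrite <- list_weight_flat_map; fold (cover_prefix d K).
    rewrite <- (list_weight_nth _ g0).
    apply Rle_trans with (sumR K (fun i => cyl_weight (nth i (cover_prefix d K) g0))).
    + apply Req_le, sumR_ext; intros i hi.
      rewrite (cover_prefix_nth d (S i) K); [reflexivity | lia | specialize (hlen (S i)); lia].
    + apply sumR_mono; [intros; apply Rlt_le, cyl_weight_pos | apply hlen].
Qed.

(* Each piece is padded with a cylinder of weight [2^-(n+M)] to make it nonempty. *)
Lemma cyl_null_null F : cyl_null F -> null F.
Proof.
  intros hF eps he; destruct (half_pow_small (eps / 4) ltac:(lra)) as [M hM].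
  destruct (cyl_null_full_cover F hF (eps / 4) ltac:(lra)) as [c [hfull [hc hw]]].
  pose (d := fun n => c n ++ [full_cyl (n + M) empty_sub]).
  destruct (cover_enumeration d) as [e [he1 [he2 he3]]].
  { intros n; unfold d; destruct (c n); simpl; discriminate. }
  assert (hefull : forall i, e i = full_cyl (cyl_len (e i)) (cyl_pat (e i))).
  { intros i; destruct (he2 i) as [n hn]; unfold d in hn; apply in_app_or in hn as [hn|[hn|[]]].
    - pose proof (hfull n _ hn) as hm; destruct (e i); simpl in *; subst; reflexivity.
    - rewrite <- hn; reflexivity. }
  exists (fun i => cyl_len (e i)), (fun i => cyl_pat (e i)); split.
  - intros f hf; destruct (hc f hf) as [n [g [hg hgf]]].
    destruct (he1 n g) as [i hi]; [unfold d; apply in_or_app; auto|].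
    exists i; pose proof (hefull i) as hei; rewrite hi in hei |- *.
    rewrite hei, cyl_mem_full in hgf; exact hgf.
  - intros K; rewrite sum_f_R0_sumR.
    apply Rle_lt_trans with (cover_weight d (S K)).
    + eapply Rle_trans; [|apply he3]; apply Req_le, sumR_ext; intros i _.
      rewrite (hefull i) at 2; rewrite cyl_weight_full; reflexivity.
    + unfold cover_weight, d; rewrite (sumR_ext _ _ (fun n => list_weight (c n) + (/2) ^ M * (/2) ^ n)).
      * rewrite sumR_plus, sumR_scal; fold (cover_weight c (S K)); pose proof (hw (S K)).
        assert (hgeom : forall N, sumR N (fun n => (/2) ^ n) = 2 * (1 - (/2) ^ N))
          by (induction N; simpl; [lra | rewrite IHN; simpl; lra]).
        rewrite hgeom; pose proof (half_pow_pos M); pose proof (half_pow_pos (S K)); nra.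
      * intros i _; rewrite list_weight_app; simpl; rewrite cyl_weight_full, pow_add; lra.
Qed.

Lemma null_cyl_null F : null F -> cyl_null F.
Proof.
  intros hF eps he; destruct (hF eps he) as [n [s [hc hw]]].
  exists (fun i => [full_cyl (n i) (s i)]); split.
  - intros x hx; destruct (hc x hx) as [i hi]; exists i, (full_cyl (n i) (s i)).
    split; [left; auto | apply cyl_mem_full; auto].
  - intros N; destruct N; [unfold cover_weight; simpl; lra|].
    specialize (hw N); rewrite sum_f_R0_sumR in hw; apply Rlt_le; eapply Rle_lt_trans; [|exact hw].
    apply Req_le, sumR_ext; intros i _; unfold list_weight; simpl; rewrite cyl_weight_full; lra.
Qed.

Definition cover_count (l : list cyl) (y : subw) : R :=
  fold_right (fun g a => ind (cyl_mem g y) + a) 0 l.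

Lemma cover_count_nonneg l y : 0 <= cover_count l y.
Proof. induction l; simpl; [lra|]; pose proof (ind_nonneg (cyl_mem a y)); lra. Qed.

Lemma cover_count_ge1 l y g : In g l -> cyl_mem g y -> 1 <= cover_count l y.
Proof.
  induction l; simpl; [tauto|]; intros [<-|h] hg.
  - rewrite ind_true; auto; pose proof (cover_count_nonneg l y); lra.
  - pose proof (IHl h hg); pose proof (ind_nonneg (cyl_mem a y)); lra.
Qed.

Lemma avg_cover_count L l x : (forall g, In g l -> (cyl_len g <= L)%nat) ->
  avg L (cover_count l) x = list_weight l.
Proof.
  induction l; intros h; [exact (avg_const L 0 x)|].
  change (cover_count (a :: l)) with (fun y => ind (cyl_mem a y) + cover_count l y).
  rewrite avg_plus, IHl, avg_cyl; [reflexivity | apply h; simpl; auto | intros; apply h; simpl; auto].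
Qed.

Fixpoint max_len (c : cover) (N : nat) : nat :=
  match N with
  | 0%nat => 0%nat
  | S N' => Nat.max (max_len c N') (fold_right (fun g a => Nat.max (cyl_len g) a) 0%nat (c N'))
  end.

Lemma max_len_spec c N n g : (n < N)%nat -> In g (c n) -> (cyl_len g <= max_len c N)%nat.
Proof.
  induction N; intros hn hg; [lia|]; simpl; destruct (Nat.eq_dec n N) as [->|].
  - assert (h : forall l, In g l -> (cyl_len g <= fold_right (fun g a => Nat.max (cyl_len g) a) 0%nat l)%nat)
      by (induction l; simpl; [tauto | intros [<-|h]; [lia | specialize (IHl h); lia]]).
    specialize (h _ hg); lia.
  - specialize (IHN ltac:(lia) hg); lia.
Qed.

Lemma max_len_mono c N N' : (N <= N')%nat -> (max_len c N <= max_len c N')%nat.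
Proof. intros h; induction h; simpl; lia. Qed.

Lemma avg_cover c N L x : (max_len c N <= L)%nat ->
  avg L (fun y => sumR N (fun n => cover_count (c n) y)) x = cover_weight c N.
Proof.
  intros hL; rewrite avg_sumR; unfold cover_weight; apply sumR_ext; intros i hi; apply avg_cover_count.
  intros g hg; pose proof (max_len_spec c N i g hi hg); lia.
Qed.

Lemma binary_konig (Q : subw -> nat -> Prop) :
  (forall p q n, (forall k, (k < n)%nat -> p k = q k) -> Q p n -> Q q n) -> Q empty_sub 0%nat ->
  (forall p n, Q p n -> Q (upd p n true) (S n) \/ Q (upd p n false) (S n)) ->
  exists x, forall n, Q x n.
Proof.
  intros hloc h0 hstep.
  pose (pre := fix pre (n : nat) : subw :=
    match n with 0%nat => empty_sub | S n' => upd (pre n') n' (dec (Q (upd (pre n') n' true) (S n'))) end).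
  assert (hpre : forall n, Q (pre n) n).
  { induction n; auto; simpl; destruct (hstep _ _ IHn) as [h|h].
    - rewrite (proj2 (dec_true _) h); exact h.
    - destruct (dec (Q (upd (pre n) n true) (S n))) eqn:E; [apply (proj1 (dec_true _)) in E|]; auto. }
  assert (hagree : forall n k, (k < n)%nat -> pre n k = pre (S k) k).
  { induction n; intros k hk; [lia|]; destruct (Nat.eq_dec k n) as [->|]; auto.
    simpl; rewrite upd_other; auto; apply IHn; lia. }
  exists (fun k => pre (S k) k); intros n; apply (hloc (pre n)); auto.
Qed.

Lemma compact_cover (c : cover) : covers c (fun _ => True) ->
  exists N, forall x, exists n g, (n < N)%nat /\ In g (c n) /\ cyl_mem g x.
Proof.
  intros hc; apply NNPP; intros hno.
  pose (Q := fun (p : subw) (n : nat) => forall N, exists x, (forall k, (k < n)%nat -> x k = p k) /\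
               forall n' g, (n' < N)%nat -> In g (c n') -> ~ cyl_mem g x).
  destruct (binary_konig Q) as [xs hxs].
  - intros p q n hpq hp N; destruct (hp N) as [x [h1 h2]]; exists x; split; auto.
    intros k hk; rewrite h1, hpq; auto.
  - intros N; apply NNPP; intros h; apply hno; exists N; intros x; apply NNPP; intros h2; apply h.
    exists x; split; [intros; lia|]; intros n' g hn hg hgx; apply h2; exists n', g; auto.
  - intros p n hQ; apply NNPP; intros h; apply not_or_and in h as [h1 h2].
    apply not_all_ex_not in h1 as [N1 h1]; apply not_all_ex_not in h2 as [N2 h2].
    destruct (hQ (Nat.max N1 N2)) as [x [hx1 hx2]].
    assert (hxu : forall k, (k < S n)%nat -> x k = upd p n (x n) k)
      by (intros k hk; unfold upd; destruct (Nat.eqb_spec k n); [subst; auto | apply hx1; lia]).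
    destruct (x n) eqn:Exn; [apply h1 | apply h2]; exists x; split; auto;
      intros n' g hn' hg; apply (hx2 n' g); auto; lia.
  - destruct (hc xs I) as [n0 [g [hg hgx]]].
    destruct (hxs (cyl_len g) (S n0)) as [x [hx1 hx2]]; apply (hx2 n0 g ltac:(lia) hg).
    apply (cyl_mem_local g xs); auto; intros k hk; rewrite hx1; auto.
Qed.

(* By compactness a finite stage of the cover covers everything, so averaging the number of its pieces
   containing a point bounds its weight from below by 1. *)
Lemma full_not_cyl_null : ~ cyl_null (fun _ => True).
Proof.
  intros h; destruct (h (1 / 2) ltac:(lra)) as [c [hc hw]].
  destruct (compact_cover c hc) as [N hN].
  pose proof (avg_cover c N (max_len c N) empty_sub (le_n _)) as e.
  assert (1 <= avg (max_len c N) (fun y => sumR N (fun n => cover_count (c n) y)) empty_sub).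
  { rewrite <- (avg_const (max_len c N) 1 empty_sub); apply avg_mono; intros y.
    destruct (hN y) as [n [g [hn [hg hgy]]]].
    replace N with (S n + (N - S n))%nat by lia; rewrite sumR_split.
    change (sumR (S n) ?f) with (sumR n f + f n); cbv beta.
    pose proof (cover_count_ge1 _ _ _ hg hgy).
    pose proof (sumR_nonneg n (fun i => cover_count (c i) y) ltac:(intros; apply cover_count_nonneg)).
    pose proof (sumR_nonneg (N - S n) (fun j => cover_count (c (S n + j)%nat) y)
                  ltac:(intros; apply cover_count_nonneg)).
    lra. }
  specialize (hw N); lra.
Qed.

(** * Fubini's theorem for null sets *)

Definition even_part (x : subw) : subw := fun k => x (2 * k)%nat.
Definition odd_part (x : subw) : subw := fun k => x (S (2 * k)).
Definition glue (a b : subw) : subw := fun k => if Nat.even k then a (Nat.div2 k) else b (Nat.div2 k).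

Lemma glue_even a b k : glue a b (2 * k)%nat = a k.
Proof. unfold glue; rewrite Nat.even_even, Nat.div2_double; reflexivity. Qed.

Lemma glue_odd a b k : glue a b (S (2 * k)) = b k.
Proof.
  unfold glue; replace (S (2 * k)) with (2 * k + 1)%nat by lia.
  rewrite Nat.even_odd, Nat.div2_odd'; reflexivity.
Qed.

Lemma even_part_glue a b : even_part (glue a b) = a.
Proof. apply functional_extensionality; intros k; apply glue_even. Qed.

Lemma odd_part_glue a b : odd_part (glue a b) = b.
Proof. apply functional_extensionality; intros k; apply glue_odd. Qed.

Definition mask_below (L : nat) (m : subw) : subw := fun j => m j && Nat.ltb j L.

Lemma mask_count_ext L m m' : (forall k, (k < L)%nat -> m k = m' k) -> mask_count L m = mask_count L m'.
Proof. induction L; intros h; simpl; auto; rewrite IHL, h by (intros; try apply h; lia); reflexivity. Qed.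

Lemma mask_count_below L L' m : (L <= L')%nat -> mask_count L' (mask_below L m) = mask_count L m.
Proof.
  intros h; induction h.
  - apply mask_count_ext; intros k hk; unfold mask_below.
    rewrite (proj2 (Nat.ltb_lt k L) hk), andb_true_r; reflexivity.
  - simpl; unfold mask_below at 2; rewrite (proj2 (Nat.ltb_ge m0 L) ltac:(lia)), andb_false_r; lia.
Qed.

Lemma mask_count_double N m :
  mask_count (2 * N) m = (mask_count N (fun k => m (2 * k)%nat) + mask_count N (fun k => m (S (2 * k))))%nat.
Proof.
  induction N; auto; replace (2 * S N)%nat with (S (S (2 * N))) by lia.
  change (mask_count (S (S (2 * N))) m)
    with (mask_count (2 * N) m + (if m (2 * N)%nat then 1 else 0) + (if m (S (2 * N)) then 1 else 0))%nat.
  change (mask_count (S N) ?f) with (mask_count N f + (if f N then 1 else 0))%nat; rewrite IHN; lia.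
Qed.

Lemma mask_count_zero L m : (forall k, (k < L)%nat -> m k = false) -> mask_count L m = 0%nat.
Proof. induction L; intros h; simpl; auto; rewrite IHL, h; auto. Qed.

Definition cyl_even (g : cyl) : cyl :=
  Cyl (cyl_len g) (fun k => mask_below (cyl_len g) (cyl_mask g) (2 * k)%nat) (even_part (cyl_pat g)).
Definition cyl_odd (g : cyl) : cyl :=
  Cyl (cyl_len g) (fun k => mask_below (cyl_len g) (cyl_mask g) (S (2 * k))) (odd_part (cyl_pat g)).

Lemma cyl_weight_split g : cyl_weight g = cyl_weight (cyl_even g) * cyl_weight (cyl_odd g).
Proof.
  unfold cyl_weight; simpl; rewrite <- pow_add; f_equal.
  rewrite <- mask_count_double; symmetry; apply mask_count_below; lia.
Qed.

Lemma cyl_mem_glue g a b : cyl_mem g (glue a b) <-> cyl_mem (cyl_even g) a /\ cyl_mem (cyl_odd g) b.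
Proof.
  destruct g as [L m s]; unfold cyl_mem, cyl_even, cyl_odd, mask_below, even_part, odd_part;
  cbn [cyl_len cyl_mask cyl_pat]; split.
  - intros h; split; intros k hk hm; apply andb_prop in hm as [h1 h2]; apply Nat.ltb_lt in h2;
      specialize (h _ h2 h1); [rewrite glue_even in h | rewrite glue_odd in h]; exact h.
  - intros [ha hb] j hj hm; destruct (Nat.Even_or_Odd j) as [[k ->]|[k ->]].
    + rewrite glue_even; apply ha; [lia|]; rewrite hm; simpl; apply Nat.ltb_lt; auto.
    + replace (2 * k + 1)%nat with (S (2 * k)) in * by lia.
      rewrite glue_odd; apply hb; [lia|]; rewrite hm; simpl; apply Nat.ltb_lt; auto.
Qed.

Lemma sum_first_crossing (P : nat -> Prop) : (forall N, P N -> P (S N)) -> ~ P 0%nat ->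
  forall K, sumR K (fun N => ind (P (S N) /\ ~ P N)) = ind (P K).
Proof.
  intros hm h0 K; induction K; simpl; [rewrite ind_false; auto|]; rewrite IHK.
  destruct (classic (P K)) as [h|h].
  - rewrite (ind_true (P K)), (ind_false (P (S K) /\ ~ P K)), (ind_true (P (S K))); auto; [lra | tauto].
  - rewrite (ind_false (P K) h); destruct (classic (P (S K))) as [h'|h'].
    + rewrite !ind_true; auto; lra.
    + rewrite !ind_false; auto; [lra | tauto].
Qed.

(* For an increasing sequence of sets, covering [D (S N) \ D N] at stage [N] by full cylinders
   gives a cover of the union whose finite stages have the weights of the [D K]. *)
Lemma cover_increasing_union (D : nat -> subw -> Prop) (L : nat -> nat) :
  (forall N, (L N <= L (S N))%nat) ->
  (forall N x y, (forall k, (k < L N)%nat -> x k = y k) -> D N x -> D N y) ->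
  (forall N b, D N b -> D (S N) b) -> (forall b, ~ D 0%nat b) ->
  exists c, covers c (fun b => exists N, D N b) /\
    forall K, cover_weight c K = avg (L K) (fun y => ind (D K y)) empty_sub.
Proof.
  intros hL hloc hmono hD0.
  assert (hLle : forall N K, (N <= K)%nat -> (L N <= L K)%nat)
    by (intros N K h; induction h; [lia | specialize (hL m); lia]).
  assert (hstep_loc : forall N x y, (forall k, (k < L (S N))%nat -> x k = y k) ->
            (D (S N) x /\ ~ D N x) -> D (S N) y /\ ~ D N y).
  { intros N x y hxy [h1 h2]; split; [apply (hloc _ x); auto|].
    intros h; apply h2, (hloc N y x); auto; intros k hk; symmetry; apply hxy; specialize (hL N); lia. }
  destruct (choice _ (fun N => local_set_cover (L (S N)) _ (hstep_loc N))) as [ts hts].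
  exists (fun N => map (full_cyl (L (S N))) (ts N)); split.
  - intros b [N hN].
    assert (hfirst : exists N', D (S N') b /\ ~ D N' b).
    { induction N; [destruct (hD0 b hN)|].
      destruct (classic (D N b)) as [h|h]; [apply IHN; auto | exists N; auto]. }
    destruct hfirst as [N' hN']; destruct (proj1 (hts N') b hN') as [t [ht htb]].
    exists N', (full_cyl (L (S N')) t); split; auto; apply in_map; auto.
  - intros K; unfold cover_weight.
    rewrite (sumR_ext K _ (fun N => avg (L K) (fun y => ind (D (S N) y /\ ~ D N y)) empty_sub)).
    + rewrite <- avg_sumR; apply avg_ext; intros y; apply (sum_first_crossing (fun N => D N y)); auto.
    + intros N hN; rewrite list_weight_full_cyls, (proj2 (hts N)); symmetry; apply avg_extra_coords; [|apply hLle; lia].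
      intros x y hxy; apply ind_iff; split; apply hstep_loc; auto; intros k hk; symmetry; auto.
Qed.

(* The total weight of the sections at [b] of the cylinders of [l]. *)
Definition section_mass (l : list cyl) (b : subw) : R :=
  fold_right (fun g acc => ind (cyl_mem (cyl_odd g) b) * cyl_weight (cyl_even g) + acc) 0 l.

Definition section_cover (c : cover) (b : subw) : cover :=
  fun n => map cyl_even (filter (fun g => dec (cyl_mem (cyl_odd g) b)) (c n)).

Lemma section_mass_nonneg l b : 0 <= section_mass l b.
Proof.
  induction l; simpl; [lra|].
  pose proof (ind_nonneg (cyl_mem (cyl_odd a) b)); pose proof (cyl_weight_pos (cyl_even a)); nra.
Qed.

Lemma section_cover_weight c b N : cover_weight (section_cover c b) N = sumR N (fun n => section_mass (c n) b).
Proof.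
  apply sumR_ext; intros n _; unfold section_cover; induction (c n) as [|g l IH]; simpl; auto.
  destruct (dec (cyl_mem (cyl_odd g) b)) eqn:E.
  - rewrite (ind_true _ (proj1 (dec_true _) E)); simpl; rewrite IH; lra.
  - rewrite (ind_false _ (proj1 (dec_false _) E)), IH; lra.
Qed.

Lemma section_cover_covers c T b : covers c T -> covers (section_cover c b) (fun a => T (glue a b)).
Proof.
  intros hc a ha; destruct (hc _ ha) as [n [g [hg hga]]]; apply cyl_mem_glue in hga as [h1 h2].
  exists n, (cyl_even g); split; auto; apply in_map, filter_In; split; auto; apply dec_true; auto.
Qed.

Lemma avg_section_mass L l x : (forall g, In g l -> (cyl_len g <= L)%nat) ->
  avg L (section_mass l) x = list_weight l.
Proof.
  induction l; intros h; [exact (avg_const L 0 x)|].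
  change (section_mass (a :: l))
    with (fun y => ind (cyl_mem (cyl_odd a) y) * cyl_weight (cyl_even a) + section_mass l y).
  rewrite avg_plus, IHl by (intros; apply h; simpl; auto).
  rewrite (avg_ext L _ (fun y => cyl_weight (cyl_even a) * ind (cyl_mem (cyl_odd a) y))) by (intros; lra).
  rewrite avg_scal, avg_cyl by (simpl; apply h; simpl; auto).
  simpl; rewrite (cyl_weight_split a); lra.
Qed.

Lemma section_mass_local l L b b' : (forall g, In g l -> (cyl_len g <= L)%nat) ->
  (forall k, (k < L)%nat -> b k = b' k) -> section_mass l b = section_mass l b'.
Proof.
  induction l; intros h hb; simpl; auto; rewrite IHl by (auto; intros; apply h; simpl; auto).
  f_equal; f_equal; apply ind_iff.
  assert (cyl_len (cyl_odd a) <= L)%nat by (simpl; apply h; simpl; auto).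
  split; apply cyl_mem_local; intros; [|symmetry]; apply hb; lia.
Qed.

(* Markov's inequality: the points where the section mass of a cover of [T] of weight
   [eps 2^-m] exceeds [2^-m] form a set of weight at most [eps]. *)
Lemma fubini_level T m : cyl_null T ->
  cyl_null (fun b => forall c, covers c (fun a => T (glue a b)) -> exists N, (/2) ^ m < cover_weight c N).
Proof.
  intros hT eps he; pose proof (half_pow_pos m) as hpm.
  destruct (hT (eps * (/2) ^ m) ltac:(nra)) as [c [hc hw]].
  pose (mass := fun N b => sumR N (fun n => section_mass (c n) b)).
  pose (D := fun N b => (/2) ^ m < mass N b).
  assert (hmass_local : forall N b b', (forall k, (k < max_len c N)%nat -> b k = b' k) -> mass N b = mass N b').
  { intros N b b' hb; apply sumR_ext; intros i hi; apply (section_mass_local _ (max_len c N)); auto.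
    intros g hg; apply (max_len_spec c N i g hi hg). }
  destruct (cover_increasing_union D (max_len c)) as [d [hd hdw]].
  - intros N; apply max_len_mono; lia.
  - intros N x y hxy; unfold D; rewrite (hmass_local N x y hxy); auto.
  - intros N b; unfold D, mass; simpl; pose proof (section_mass_nonneg (c N) b); lra.
  - intros b; unfold D, mass; simpl; lra.
  - exists d; split.
    + intros b hb; apply hd; destruct (hb _ (section_cover_covers c T b hc)) as [N hN].
      exists N; unfold D, mass; rewrite <- section_cover_weight; exact hN.
    + intros K; rewrite hdw; apply Rle_trans with (avg (max_len c K) (fun y => / (/2) ^ m * mass K y) empty_sub).
      * apply avg_mono; intros y; pose proof (Rinv_0_lt_compat _ hpm).
        destruct (classic (D K y)) as [h|h]; [rewrite ind_true | rewrite ind_false]; auto.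
        -- unfold D in h; apply Rmult_le_reg_l with ((/2) ^ m); auto; rewrite <- Rmult_assoc, Rinv_r; lra.
        -- assert (0 <= mass K y) by (apply sumR_nonneg; intros; apply section_mass_nonneg); nra.
      * rewrite avg_scal; unfold mass; rewrite avg_sumR.
        rewrite (sumR_ext K _ (fun n => list_weight (c n)))
          by (intros i hi; apply avg_section_mass; intros g hg; apply (max_len_spec c K i g hi hg)).
        fold (cover_weight c K); specialize (hw K); pose proof (Rinv_0_lt_compat _ hpm).
        apply Rmult_le_reg_l with ((/2) ^ m); auto; rewrite <- Rmult_assoc, Rinv_r; nra.
Qed.

Lemma fubini T : cyl_null T -> cyl_null (fun b => ~ cyl_null (fun a => T (glue a b))).
Proof.
  intros hT; eapply cyl_null_sub; [apply cyl_null_countable_union; intros m; exact (fubini_level T m hT)|].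
  intros b hb; apply NNPP; intros hc; apply hb; intros eps he.
  destruct (half_pow_small eps he) as [m hm].
  apply NNPP; intros hc2; apply hc; exists m; intros c hcov; apply NNPP; intros hc3.
  apply hc2; exists c; split; auto; intros N; apply Rnot_lt_le; intros hlt; apply hc3; exists N; lra.
Qed.

Lemma product_null A B : cyl_null (fun x => A (even_part x) /\ B (odd_part x)) -> ~ cyl_null A -> cyl_null B.
Proof.
  intros hP hA; eapply cyl_null_sub; [exact (fubini _ hP)|].
  intros b hb hc; apply hA; eapply cyl_null_sub; [exact hc|].
  intros a ha; cbv beta; rewrite even_part_glue, odd_part_glue; auto.
Qed.

Lemma cyl_null_preimage (F G : family) (tr : cyl -> cyl) (h : subw -> subw) :
  (forall g, cyl_weight (tr g) = cyl_weight g) -> (forall g x, cyl_mem g (h x) -> cyl_mem (tr g) x) ->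
  (forall x, G x -> F (h x)) -> cyl_null F -> cyl_null G.
Proof.
  intros hw hin hGF hF eps he; destruct (hF eps he) as [c [hc hcw]].
  exists (fun n => map tr (c n)); split.
  - intros x hx; destruct (hc (h x) (hGF x hx)) as [n [g [hg hgx]]].
    exists n, (tr g); split; [apply in_map; auto | apply hin; auto].
  - intros N; eapply Rle_trans; [|apply (hcw N)]; apply Req_le; unfold cover_weight; apply sumR_ext; intros i _.
    induction (c i); simpl; auto; rewrite IHl, hw; auto.
Qed.

Lemma cyl_null_odd_part B : cyl_null B -> cyl_null (fun x => B (odd_part x)).
Proof.
  apply (cyl_null_preimage B _
    (fun g => Cyl (2 * cyl_len g) (glue empty_sub (cyl_mask g)) (glue (cyl_pat g) (cyl_pat g))) odd_part).
  - intros [L m s]; unfold cyl_weight; cbn [cyl_len cyl_mask]; f_equal; rewrite mask_count_double.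
    rewrite mask_count_zero by (intros k _; apply glue_even).
    apply mask_count_ext; intros k _; apply glue_odd.
  - intros [L m s] x hg; unfold cyl_mem in *; cbn [cyl_len cyl_mask cyl_pat] in *; intros j hj hm.
    destruct (Nat.Even_or_Odd j) as [[k ->]|[k ->]].
    + rewrite glue_even in hm; discriminate.
    + replace (2 * k + 1)%nat with (S (2 * k)) in * by lia.
      rewrite glue_odd in *; specialize (hg k ltac:(lia) hm); exact hg.
  - auto.
Qed.

Lemma cyl_null_compl A : cyl_null A -> cyl_null (fun x => A (compl_sub x)).
Proof.
  apply (cyl_null_preimage A _ (fun g => Cyl (cyl_len g) (cyl_mask g) (compl_sub (cyl_pat g))) compl_sub).
  - intros; reflexivity.
  - intros [L m s] x hg k hk hm; specialize (hg k hk hm); unfold compl_sub in *; simpl in *.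
    destruct (x k), (s k); simpl in *; congruence.
  - auto.
Qed.

(* The sets vanishing from [N] on sit in cylinders fixing arbitrarily many bits beyond [N]. *)
Lemma cyl_null_finite : cyl_null finite_sub.
Proof.
  eapply cyl_null_sub; [apply (cyl_null_countable_union (fun N b => forall n, (N <= n)%nat -> b n = false))|].
  2:{ intros b [N h]; exists N; auto. }
  intros N eps he; destruct (half_pow_small eps he) as [r hr].
  pose (g := Cyl (N + r) (fun j => Nat.leb N j) empty_sub).
  exists (fun n => match n with 0%nat => [g] | _ => [] end); split.
  - intros b hb; exists 0%nat, g; split; [left; auto|].
    intros k hk hm; simpl in *; apply Nat.leb_le in hm; rewrite hb; auto.
  - assert (hcnt : forall r, mask_count (N + r) (fun j => Nat.leb N j) = r).
    { induction r0.
      - rewrite Nat.add_0_r; apply mask_count_zero; intros k hk; apply Nat.leb_gt; auto.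
      - rewrite Nat.add_succ_r; simpl; rewrite IHr0, (proj2 (Nat.leb_le N (N + r0)) ltac:(lia)); lia. }
    intros M; destruct M; [unfold cover_weight; simpl; lra|]; unfold cover_weight.
    replace (S M) with (1 + M)%nat by lia; rewrite sumR_split.
    rewrite (sumR_ext M _ (fun _ => 0)) by reflexivity.
    assert (e0 : forall M, sumR M (fun _ => 0) = 0) by (induction M0; simpl; [lra | rewrite IHM0; lra]).
    rewrite e0; simpl; unfold cyl_weight; simpl; rewrite hcnt; lra.
Qed.

(** * A measure preserving map built from a balanced Boolean function *)

Definition add_bit (g : cyl) (p : nat) (b : bool) : cyl :=
  Cyl (Nat.max (cyl_len g) (S p)) (upd (mask_below (cyl_len g) (cyl_mask g)) p true) (upd (cyl_pat g) p b).

Definition free_at (g : cyl) (p : nat) : Prop := (cyl_len g <= p)%nat \/ cyl_mask g p = false.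

Lemma mask_count_upd L m p : (p < L)%nat -> m p = false -> mask_count L (upd m p true) = S (mask_count L m).
Proof.
  induction L; intros hp hm; [lia|]; simpl; destruct (Nat.eq_dec p L) as [->|].
  - rewrite (mask_count_ext L (upd m L true) m) by (intros k hk; rewrite upd_other; auto; lia).
    unfold upd; rewrite Nat.eqb_refl, hm; lia.
  - rewrite IHL, upd_other by (auto; lia); lia.
Qed.

Lemma cyl_weight_add_bit g p b : free_at g p -> cyl_weight (add_bit g p b) = cyl_weight g / 2.
Proof.
  intros hf; unfold cyl_weight, add_bit; cbn [cyl_len cyl_mask].
  rewrite mask_count_upd; [rewrite mask_count_below by lia; simpl; lra | lia |].
  unfold mask_below; destruct hf as [h|h]; [rewrite (proj2 (Nat.ltb_ge p (cyl_len g)) h), andb_false_r |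
    rewrite h]; reflexivity.
Qed.

Lemma cyl_mem_add_bit g p b x : free_at g p -> (cyl_mem (add_bit g p b) x <-> cyl_mem g x /\ x p = b).
Proof.
  intros hf; unfold cyl_mem, add_bit, free_at, mask_below in *; cbn [cyl_len cyl_mask cyl_pat] in *; split.
  - intros h; split.
    + intros k hk hm; destruct (Nat.eq_dec k p) as [->|]; [destruct hf as [hf|hf]; [lia | congruence]|].
      specialize (h k ltac:(lia)); rewrite !upd_other in h by auto; apply h.
      rewrite hm; apply Nat.ltb_lt in hk; rewrite hk; reflexivity.
    + specialize (h p ltac:(lia)); unfold upd in h; rewrite Nat.eqb_refl in h; apply h; auto.
  - intros [h1 h2] k hk hm; unfold upd in *; destruct (Nat.eqb_spec k p); [subst; auto|].
    apply andb_prop in hm as [hm1 hm2]; apply Nat.ltb_lt in hm2; apply h1; auto.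
Qed.

Lemma free_at_add_bit g p b q : free_at g q -> q <> p -> free_at (add_bit g p b) q.
Proof.
  unfold free_at, add_bit; cbn [cyl_len cyl_mask]; intros [h|h] hq; right; rewrite upd_other by auto;
    unfold mask_below; [rewrite (proj2 (Nat.ltb_ge q _) h), andb_false_r | rewrite h]; auto.
Qed.

Fixpoint add_bits (g : cyl) (pb : list (nat * bool)) : cyl :=
  match pb with [] => g | (p, b) :: r => add_bits (add_bit g p b) r end.

Lemma add_bits_spec pb : forall g, NoDup (map fst pb) -> (forall p, In p (map fst pb) -> free_at g p) ->
  (forall x, cyl_mem (add_bits g pb) x <-> cyl_mem g x /\ forall p b, In (p, b) pb -> x p = b) /\
  cyl_weight (add_bits g pb) = cyl_weight g * (/2) ^ length pb /\
  (forall q, free_at g q -> ~ In q (map fst pb) -> free_at (add_bits g pb) q).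
Proof.
  induction pb as [|[p b] r IH]; intros g hnd hfree.
  - simpl; split; [intros x; split; [intros h; split; auto; intros p b [] | tauto]|]; split; [lra | auto].
  - simpl in hnd |- *; inversion hnd as [|? ? hnin hnd']; subst.
    assert (hf' : forall q, In q (map fst r) -> free_at (add_bit g p b) q)
      by (intros q hq; apply free_at_add_bit; [apply hfree; right; auto | intro; subst; auto]).
    destruct (IH (add_bit g p b) hnd' hf') as [h1 [h2 h3]]; split; [|split].
    + intros x; rewrite h1, cyl_mem_add_bit by (apply hfree; left; auto); split.
      * intros [[ha hb] hc]; split; auto; intros p' b' [e|e]; [inversion e; subst; auto | auto].
      * intros [ha hb]; split; [split; auto|]; intros; apply hb; auto.
    + rewrite h2, cyl_weight_add_bit by (apply hfree; left; auto); simpl; lra.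
    + intros q hq hn; apply h3; [apply free_at_add_bit; auto; intro; subst; apply hn; left; auto |
                                 intro; apply hn; right; auto].
Qed.

Fixpoint all_words (n : nat) : list (list bool) :=
  match n with
  | 0%nat => [[]]
  | S n' => map (cons false) (all_words n') ++ map (cons true) (all_words n')
  end.

Lemma all_words_complete n a : length a = n -> In a (all_words n).
Proof.
  revert a; induction n; intros a h; destruct a; simpl in *; try lia; auto.
  apply in_or_app; destruct b; [right | left]; apply in_map, IHn; lia.
Qed.

Lemma all_words_length n a : In a (all_words n) -> length a = n.
Proof.
  revert a; induction n; intros a h; simpl in *; [destruct h as [<-|[]]; auto|].
  apply in_app_or in h as [h|h]; apply in_map_iff in h as [a' [<- h]]; simpl; rewrite IHn; auto.
Qed.

(* [x (slot k (2 * i))] and [x (slot k (2 * i + 1))] are the [k]-th bits of [even_part y] and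
   [odd_part y], where [y] is [even_part x], [even_part (odd_part x)], [odd_part (odd_part x)] for
   [i = 0, 1, 2]. *)
Definition slot (k j : nat) : nat :=
  match j with
  | 0%nat => 2 * (2 * k)
  | 1%nat => 2 * S (2 * k)
  | 2%nat => S (2 * (2 * (2 * k)))
  | 3%nat => S (2 * (2 * S (2 * k)))
  | 4%nat => S (2 * S (2 * (2 * k)))
  | _ => S (2 * S (2 * S (2 * k)))
  end%nat.

Definition slots6 : list nat := [0; 1; 2; 3; 4; 5]%nat.

Lemma slot_inj k j k' j' : (j < 6)%nat -> (j' < 6)%nat -> slot k j = slot k' j' -> k = k' /\ j = j'.
Proof. intros hj hj' h; destruct j as [|[|[|[|[|[|]]]]]]; destruct j' as [|[|[|[|[|[|]]]]]]; simpl in h; lia. Qed.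

Lemma slots_NoDup n : NoDup (map (slot n) slots6).
Proof. unfold slots6; simpl; repeat constructor; simpl; intros H; repeat destruct H as [H|H]; auto; lia. Qed.

Definition block_map (f : list bool -> bool) (x : subw) : subw :=
  fun k => f (map (fun j => x (slot k j)) slots6).

Definition preimage_words (f : list bool -> bool) (b : bool) : list (list bool) :=
  filter (fun a => Bool.eqb (f a) b) (all_words 6).

Definition fix_block (h : cyl) (n : nat) (a : list bool) : cyl := add_bits h (combine (map (slot n) slots6) a).

Lemma map_fst_combine {A B} (l1 : list A) (l2 : list B) : length l1 = length l2 -> map fst (combine l1 l2) = l1.
Proof. revert l2; induction l1; intros [|b l2] h; simpl in *; auto; try lia; rewrite IHl1; auto. Qed.

Lemma fix_block_spec h n a : In a (all_words 6) -> (forall j, (j < 6)%nat -> free_at h (slot n j)) ->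
  (forall x, cyl_mem h x -> map (fun j => x (slot n j)) slots6 = a -> cyl_mem (fix_block h n a) x) /\
  cyl_weight (fix_block h n a) = cyl_weight h * (/2) ^ 6 /\
  (forall k j, k <> n -> (j < 6)%nat -> free_at h (slot k j) -> free_at (fix_block h n a) (slot k j)).
Proof.
  intros ha hfree; pose proof (all_words_length _ _ ha) as hla.
  assert (hlen : length (map (slot n) slots6) = length a) by (rewrite length_map; auto).
  destruct (add_bits_spec (combine (map (slot n) slots6) a) h) as [h1 [h2 h3]]; rewrite ?map_fst_combine; auto.
  - apply slots_NoDup.
  - intros p hp; apply in_map_iff in hp as [j [<- hj]]; apply hfree; unfold slots6 in hj; simpl in hj; lia.
  - split; [|split; [unfold fix_block; rewrite h2, length_combine, hla; reflexivity|]].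
    + intros x hx <-; apply h1; split; auto; generalize slots6; induction l; simpl; [tauto|].
      intros p b [e|e]; [inversion e; auto | auto].
    + intros k j hkn hj hf; apply h3; auto; rewrite map_fst_combine; auto.
      intros hin; apply in_map_iff in hin as [j' [e hj']]; apply slot_inj in e as [e _]; [lia | | auto].
      unfold slots6 in hj'; simpl in hj'; lia.
Qed.

Lemma list_weight_fix_blocks f h n b : (forall b, length (preimage_words f b) = 32%nat) ->
  (forall j, (j < 6)%nat -> free_at h (slot n j)) ->
  list_weight (map (fix_block h n) (preimage_words f b)) = cyl_weight h / 2.
Proof.
  intros hbal hfree.
  assert (hgen : forall la, incl la (all_words 6) ->
            list_weight (map (fix_block h n) la) = INR (length la) * (cyl_weight h * (/2) ^ 6)).
  { induction la; intros hi; [simpl; lra|].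
    change (list_weight (map ?F (a :: la))) with (cyl_weight (F a) + list_weight (map F la)).
    rewrite (proj1 (proj2 (fix_block_spec h n a (hi a (or_introl eq_refl)) hfree))).
    rewrite IHla by (intros z hz; apply hi; right; auto).
    change (length (a :: la)) with (S (length la)); rewrite S_INR; lra. }
  rewrite hgen, hbal; [simpl; lra|]; intros z hz; apply filter_In in hz; tauto.
Qed.

(* Fixing the next block to one of the 32 words mapped to the prescribed bit halves the weight. *)
Lemma block_map_preimage_cylinder f : (forall b, length (preimage_words f b) = 32%nat) ->
  forall n s, exists l, (forall x, (forall k, (k < n)%nat -> block_map f x k = s k) ->
      exists h, In h l /\ cyl_mem h x) /\ list_weight l = (/2) ^ n /\
    (forall h, In h l -> forall k j, (n <= k)%nat -> (j < 6)%nat -> free_at h (slot k j)).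
Proof.
  intros hbal n s; induction n.
  - exists [Cyl 0 empty_sub empty_sub]; split; [|split].
    + intros x _; exists (Cyl 0 empty_sub empty_sub); split; [left; auto | intros k hk; simpl in hk; lia].
    + unfold list_weight, cyl_weight; simpl; lra.
    + intros h [<-|[]] k j _ _; left; simpl; lia.
  - destruct IHn as [l [hc [hw hfr]]].
    pose (ext := fun h => map (fix_block h n) (preimage_words f (s n))).
    assert (hspec : forall h a, In h l -> In (a : list bool) (preimage_words f (s n)) ->
      (forall x, cyl_mem h x -> map (fun j => x (slot n j)) slots6 = a -> cyl_mem (fix_block h n a) x) /\
      cyl_weight (fix_block h n a) = cyl_weight h * (/2) ^ 6 /\
      (forall k j, k <> n -> (j < 6)%nat -> free_at h (slot k j) -> free_at (fix_block h n a) (slot k j))).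
    { intros h a hh ha; apply filter_In in ha as [ha _]; apply fix_block_spec; auto. }
    exists (flat_map ext l); split; [|split].
    + intros x hx; destruct (hc x) as [h [hh hhx]]; [intros; apply hx; lia|].
      assert (ha : In (map (fun j => x (slot n j)) slots6) (preimage_words f (s n))).
      { apply filter_In; split; [apply all_words_complete; reflexivity|].
        specialize (hx n ltac:(lia)); unfold block_map in hx; rewrite hx; apply eqb_reflx. }
      exists (fix_block h n (map (fun j => x (slot n j)) slots6)); split.
      * apply in_flat_map; exists h; split; auto; apply in_map; auto.
      * apply (proj1 (hspec h _ hh ha)); auto.
    + assert (hgen : forall l', incl l' l -> list_weight (flat_map ext l') = list_weight l' / 2).
      { induction l'; intros hi; [simpl; lra|]; cbn [flat_map]; unfold ext at 1; rewrite list_weight_app.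
        rewrite (list_weight_fix_blocks f a n (s n) hbal) by (intros j hj; apply hfr; auto; apply hi; left; auto).
        rewrite IHl' by (intros z hz; apply hi; right; auto); simpl; lra. }
      rewrite hgen by apply incl_refl; rewrite hw; simpl; lra.
    + intros h' hh' k j hk hj; apply in_flat_map in hh' as [h [hh hh']].
      apply in_map_iff in hh' as [a [<- ha]]; apply (hspec h a hh ha); auto; [lia | apply hfr; auto; lia].
Qed.

Lemma cyl_null_block_map f (I : family) : (forall b, length (preimage_words f b) = 32%nat) ->
  cyl_null I -> cyl_null (fun x => I (block_map f x)).
Proof.
  intros hbal hI eps he; destruct (cyl_null_full_cover I hI eps he) as [c [hfull [hc hw]]].
  destruct (choice _ (fun g => block_map_preimage_cylinder f hbal (cyl_len g) (cyl_pat g))) as [pl hpl].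
  exists (fun n => flat_map pl (c n)); split.
  - intros x hx; destruct (hc _ hx) as [n [g [hg hgx]]]; destruct (proj1 (hpl g) x) as [h [hh hhx]].
    + intros k hk; apply hgx; auto; rewrite (hfull n g hg); reflexivity.
    + exists n, h; split; auto; apply in_flat_map; exists g; auto.
  - intros N; eapply Rle_trans; [|apply (hw N)]; apply Req_le; unfold cover_weight; apply sumR_ext; intros i _.
    assert (hgen : forall l', incl l' (c i) -> list_weight (flat_map pl l') = list_weight l').
    { induction l'; intros hi; simpl; auto; rewrite list_weight_app, IHl' by (intros z hz; apply hi; right; auto).
      rewrite (proj1 (proj2 (hpl a))); unfold cyl_weight.
      rewrite (hfull i a (hi a (or_introl eq_refl))), mask_count_full; reflexivity. }
    apply hgen, incl_refl.
Qed.

(* A balanced function of six bits lying below [(y1 && c1) || (y2 && c2) || (y3 && c3)], where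
   [ci = xorb neg zi]: the three products have measure [1/4] each, their union [37/64]. *)
Definition balanced_select (neg : bool) (a : list bool) : bool :=
  match a with
  | [y1; z1; y2; z2; y3; z3] =>
      if xorb neg z1 then y1 || (xorb neg z2 && y2)
      else if xorb neg z2 then y2 else if xorb neg z3 then y3 else false
  | _ => false
  end.

Lemma balanced_select_balanced neg b : length (preimage_words (balanced_select neg) b) = 32%nat.
Proof. destruct neg, b; vm_compute; reflexivity. Qed.

Lemma balanced_select_below neg y1 z1 y2 z2 y3 z3 : balanced_select neg [y1; z1; y2; z2; y3; z3] = true ->
  (y1 && xorb neg z1) || (y2 && xorb neg z2) || (y3 && xorb neg z3) = true.
Proof. destruct neg, y1, z1, y2, z2, y3, z3; simpl; auto. Qed.

Definition xor_sub (neg : bool) (y : subw) : subw := fun k => xorb neg (y k).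

(* If the set [T] were not null, neither would be the set of [x] whose three parts all lie in [T];
   [balanced_select] maps such [x] into [I], yet it pulls the null set [I] back to a null set. *)
Lemma trace_set_null (I : family) (neg : bool) : is_ideal I -> cyl_null I ->
  cyl_null (fun y => I (inter_sub (even_part y) (xor_sub neg (odd_part y)))).
Proof.
  intros hI hg; set (T := fun y => I (inter_sub (even_part y) (xor_sub neg (odd_part y)))).
  apply NNPP; intros hT.
  assert (h2 : ~ cyl_null (fun x => T (even_part x) /\ T (odd_part x)))
    by (intros h; exact (hT (product_null T T h hT))).
  apply h2, (product_null T (fun x => T (even_part x) /\ T (odd_part x))); [|exact hT].
  eapply cyl_null_sub;
    [exact (cyl_null_block_map (balanced_select neg) I (balanced_select_balanced neg) hg)|].
  intros x [ha [hb hc]]; unfold T in *.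
  refine (ideal_sub_closed I hI _ _ (ideal_union I hI _ _ (ideal_union I hI _ _ ha hb) hc) _).
  intros k hk; unfold block_map, slots6 in hk; cbn [map] in hk; apply balanced_select_below in hk.
  exact hk.
Qed.

Lemma null_ideal_split I : null_ideal I ->
  exists Z, cyl_null (ideal_trace I Z) /\ cyl_null (ideal_trace I (compl_sub Z)).
Proof.
  intros [hI hn]; apply null_cyl_null in hn.
  pose proof (fubini _ (trace_set_null I false hI hn)) as F1.
  pose proof (fubini _ (trace_set_null I true hI hn)) as F2.
  apply NNPP; intros hno; apply full_not_cyl_null; eapply cyl_null_sub; [exact (cyl_null_union _ _ F1 F2)|].
  intros Z _; apply NNPP; intros hc; apply hno; exists Z;
    split; apply NNPP; intros h; apply hc; [left | right]; intros h'; apply h;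
    eapply cyl_null_sub; try exact h'; intros a ha; cbv beta;
    rewrite even_part_glue, odd_part_glue; exact ha.
Qed.

Lemma cyl_null_trace_proper I W : is_ideal I -> cyl_null (ideal_trace I W) -> ~ I W.
Proof.
  intros hI hg hW; apply full_not_cyl_null; eapply cyl_null_sub; [exact hg|].
  intros x _; exact (ideal_sub_closed I hI _ _ hW (sub_le_interr _ _)).
Qed.

Lemma null_ideals_atomless : atomless null_ideal.
Proof.
  apply atomless_of_split; [intros K hK; apply hK|].
  intros I hI; destruct (null_ideal_split I hI) as [Z [h1 h2]]; exists Z.
  split; (split; [apply ideal_trace_ideal; [apply hI | eapply cyl_null_trace_proper; eauto; apply hI] |
                  apply cyl_null_null; auto]).
Qed.

Lemma inter_odds_glue x : inter_sub x odds = glue empty_sub (odd_part x).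
Proof.
  apply functional_extensionality; intros k; unfold inter_sub, odds.
  destruct (Nat.Even_or_Odd k) as [[j ->]|[j ->]].
  - rewrite glue_even, <- Nat.negb_even, Nat.even_even; apply andb_false_r.
  - replace (2 * j + 1)%nat with (S (2 * j)) by lia.
    rewrite glue_odd, Nat.odd_succ, Nat.even_even, andb_true_r; reflexivity.
Qed.

Lemma inter_evens_glue x : inter_sub x evens = glue (even_part x) empty_sub.
Proof.
  apply functional_extensionality; intros k; unfold inter_sub, evens, compl_sub, odds.
  destruct (Nat.Even_or_Odd k) as [[j ->]|[j ->]].
  - rewrite glue_even, <- Nat.negb_even, Nat.even_even, andb_true_r; reflexivity.
  - replace (2 * j + 1)%nat with (S (2 * j)) by lia.
    rewrite glue_odd, Nat.odd_succ, Nat.even_even; apply andb_false_r.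
Qed.

Lemma glue_empty_sub_evens a : sub_le (glue a empty_sub) evens.
Proof.
  intros n hn; unfold evens, compl_sub, odds; destruct (Nat.Even_or_Odd n) as [[j ->]|[j ->]].
  - rewrite <- Nat.negb_even, Nat.even_even; reflexivity.
  - replace (2 * j + 1)%nat with (S (2 * j)) in * by lia; rewrite glue_odd in hn; discriminate.
Qed.

Lemma finite_on_odds_null : null_ideal (finite_on odds).
Proof.
  split; [exact (finite_on_ideal odds odds_infinite)|]; apply cyl_null_null.
  eapply cyl_null_sub; [exact (cyl_null_odd_part _ cyl_null_finite)|].
  intros x [N h]; exists N; intros n hn; specialize (h (S (2 * n)) ltac:(lia)).
  rewrite inter_odds_glue, glue_odd in h; exact h.
Qed.

Lemma prime_not_null_on_evens M : prime_ideal M -> ~ cyl_null (fun a => M (glue a empty_sub)).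
Proof.
  intros [hM hprime] hA; apply full_not_cyl_null.
  eapply cyl_null_sub; [exact (cyl_null_union _ _ hA (cyl_null_compl _ hA))|]; intros a _.
  destruct (hprime (glue a empty_sub)) as [h|h]; [left; auto | right].
  apply (ideal_sub_closed M hM _ _ h); intros n hn; unfold glue, compl_sub, empty_sub in *.
  destruct (Nat.even n); simpl in *; auto.
Qed.

(* The trace of [r] on the odd numbers is null: [r] splits as a product of its even and its odd
   part, and the even part contains the prime ideal restricted to the evens, which is not null. *)
Lemma null_ideals_not_separative : ~ separative null_ideal.
Proof.
  intros hsep; destruct prime_ideal_with_odds as [M [hM hMo]].
  destruct finite_on_odds_null as [hq hqn].
  assert (hp : null_ideal (ideal_meet M (finite_on odds))).
  { split; [apply ideal_meet_ideal; auto; apply hM|].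
    apply cyl_null_null; eapply cyl_null_sub; [exact (null_cyl_null _ hqn)|]; intros x [_ h]; exact h. }
  destruct (hsep _ _ hp (conj hq hqn) (prime_meet_not_le M hM hMo)) as [r [[hr hrn] [hrp hnc]]].
  apply null_cyl_null in hrn; apply hnc.
  pose (A := fun a => r (glue a empty_sub)); pose (B := fun b => r (glue empty_sub b)).
  assert (hAB : cyl_null (fun x => A (even_part x) /\ B (odd_part x))).
  { eapply cyl_null_sub; [exact hrn|]; intros x [ha hb]; unfold A, B in *.
    rewrite <- inter_evens_glue in ha; rewrite <- inter_odds_glue in hb.
    exact (ideal_sub_closed r hr _ _ (ideal_union r hr _ _ ha hb) (split_evens_odds x)). }
  assert (hA : ~ cyl_null A).
  { intros hA; apply (prime_not_null_on_evens M hM); eapply cyl_null_sub; [exact hA|].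
    intros a ha; apply (prime_meet_evens M r); auto.
    apply glue_empty_sub_evens. }
  assert (hK : cyl_null (ideal_trace r odds)).
  { eapply cyl_null_sub; [exact (cyl_null_odd_part B (product_null A B hAB hA))|].
    intros x hx; unfold B; rewrite <- inter_odds_glue; exact hx. }
  exists (ideal_trace r odds); split; [split; [|apply cyl_null_null; auto] |split].
  - apply ideal_trace_ideal; auto; eapply cyl_null_trace_proper; eauto.
  - apply ideal_trace_sub; auto.
  - intros x hx; exact (ideal_finite r hr _ hx).
Qed.

Theorem mainTheorem8 :
  atomless meager_ideal /\ ~ separative meager_ideal /\
  atomless null_ideal /\ ~ separative null_ideal /\
  (forall I, meager_ideal I -> hered_meager_ideal (Phi I)) /\
  (forall H, hered_meager_ideal H ->
     exists I, meager_ideal I /\ (forall A, Phi I A <-> H A)) /\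
  (forall I J, meager_ideal I -> meager_ideal J ->
     ((forall A, Phi I A <-> Phi J A) <-> sq_equiv meager_ideal I J)) /\
  (forall I J, meager_ideal I -> meager_ideal J ->
     (ord_le (Phi I) (Phi J) <-> sq_le meager_ideal I J)).
Proof.
  split; [exact meager_ideals_atomless|].
  split; [exact meager_ideals_not_separative|].
  split; [exact null_ideals_atomless|].
  split; [exact null_ideals_not_separative|].
  split; [exact Phi_hered_meager|].
  split; [exact hered_meager_Phi_onto|].
  split; [exact Phi_eq_iff_sq_equiv | exact Phi_le_iff_sq_le].
Qed.
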